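(* Let $?:[0,1]\to[0,1]$ be the Minkowski question mark function and let $k\in\mathbb{N}_0=\{0,1,2,\dots\}$. Suppose that $\int_0^1\cos(2\pi n x)\,d?(x)\to 0$ as $n\to\infty$ ($n\in\mathbb{N}$). Then $$\int_0^1 (ix)^k e^{itx}\,d?(x)=o(1)\quad\text{as } |t|\to\infty.$$
   Context: The Minkowski question mark function is defined on $[0,1]$ by $?(0)=0$, $?(1)=1$ and, for $x=[0;a_1,a_2,a_3,\dots]$ written as a regular continued fraction (finite for rational $x$, in which case the sum is finite), $?(x)=2\sum_{i\ge1}(-1)^{i+1}2^{-(a_1+\cdots+a_i)}$. It is continuous, strictly increasing and singular. The hypothesis is an affirmative answer to Salem's question whether the Fourier–Stieltjes coefficients $d_n=\int_0^1\cos(2\pi nx)\,d?(x)$ tend to zero (note $\int_0^1\sin(2\pi nx)\,d?(x)=0$ for all $n$). *)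

From Stdlib Require Import Reals ZArith.
From Coquelicot Require Import Coquelicot.
Open Scope R_scope.

(* Gauss map: x |-> 1/x - floor(1/x) (and 0 |-> 0, the expansion has ended). *)
Definition gauss_map (x : R) : R :=
  if Req_EM_T x 0 then 0 else / x - IZR (Int_part (/ x)).

Fixpoint cf_rem (x : R) (i : nat) : R :=
  match i with
  | O => x
  | S j => gauss_map (cf_rem x j)
  end.

(* a_{i+1}(x) = floor(1/x_i) if x_i <> 0; 0 once the expansion terminated. *)
Definition cf_digit (x : R) (i : nat) : nat :=
  let y := cf_rem x i in
  if Req_EM_T y 0 then 0%nat else Z.to_nat (Int_part (/ y)).

Fixpoint cf_digit_sum (x : R) (i : nat) : nat :=
  match i with
  | O => cf_digit x 0
  | S j => (cf_digit_sum x j + cf_digit x (S j))%nat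
  end.

(* The (i+1)-th term 2 (-1)^{(i+1)+1} 2^{-(a_1+...+a_{i+1})}, or 0 when
   the (finite) expansion has no (i+1)-th partial quotient. *)
Definition minkowski_term (x : R) (i : nat) : R :=
  if Req_EM_T (cf_rem x i) 0 then 0
  else 2 * (-1) ^ i * (/ 2) ^ (cf_digit_sum x i).

(** Minkowski question mark function ?(x) = 2 sum_{i>=1} (-1)^{i+1} 2^{-(a_1+..+a_i)}
    (relevant on [0,1]; gives ?(0) = 0 and ?(1) = 1). *)
Definition minkowski (x : R) : R := Series (minkowski_term x).

Definition is_RS_integral {V : NormedModule R_AbsRing}
  (f : R -> V) (g : R -> R) (a b : R) (I : V) : Prop :=
  forall eps : posreal, exists delta : posreal,
    forall (n : nat) (p xi : nat -> R),
      p O = a -> p n = b ->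
      (forall i, (i < n)%nat ->
         p i <= xi i <= p (S i) /\ p (S i) - p i < delta) ->
      norm (minus (sum_n (fun i => scal (g (p (S i)) - g (p i)) (f (xi i)))
                         (pred n)) I) < eps.

Definition cis (theta : R) : C := (RtoC (cos theta) + Ci * RtoC (sin theta))%C.

From Stdlib Require Import Reals Lra Lia ZArith ClassicalEpsilon FunctionalExtensionality.
From Coquelicot Require Import Coquelicot.
Open Scope R_scope.

(* Only five properties of [?] are used: it is nondecreasing on [0,1], [?(0) = 0], [?(1) = 1],
   [?(1 - x) = 1 - ?(x)], and [?(x) -> 0] as [x -> 0+]; all follow from the functional equation
   [?(x) = 2^(-a_1) (2 - ?(G x))] for the Gauss map [G].

   For an [L]-Lipschitz integrand the Riemann--Stieltjes sums over any two partitions of mesh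
   [d1], [d2] differ by at most [L (d1 + d2)], so the integral exists and is the limit of the
   uniform left sums [U_N f], with error [L / N]. The symmetry of [?] makes [U_N sin (2 pi m x)]
   of size [O(m / N)], so by Salem's hypothesis [U_N cos (2 pi m x + c)] is small for all large
   [m] and [N >> m]. For [t = 2 pi n + s] with [0 <= s < 2 pi], replacing [cos (s x + a)] and
   [sin (s x + a)] by their Fejér means of a fixed order [K] writes [cos (t x + a)], up to a small
   error on [[eta, 1 - eta]], as an average of [cos (2 pi m x + c)] with [|m - n| <= K]; the
   intervals [[0, eta]] and [[1 - eta, 1]] have small [?]-mass. Finally, [x^(j+1) sin (t x + b)] is
   a difference quotient in [t] of [x^j cos (t x + b)] up to [O(h^2)], which gives the powers
   [x^k] by induction. *)

Fixpoint rsum (n : nat) (u : nat -> R) : R :=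
  match n with O => 0 | S m => rsum m u + u m end.

Lemma rsum_ext n u v : (forall i, (i < n)%nat -> u i = v i) -> rsum n u = rsum n v.
Proof.
  induction n as [|n IH]; intros H; simpl; auto.
  rewrite IH by (intros; apply H; lia). rewrite H by lia. reflexivity.
Qed.

Lemma rsum_le n u v : (forall i, (i < n)%nat -> u i <= v i) -> rsum n u <= rsum n v.
Proof.
  induction n as [|n IH]; intros H; simpl; [lra|].
  assert (rsum n u <= rsum n v) by (apply IH; intros; apply H; lia).
  assert (u n <= v n) by (apply H; lia). lra.
Qed.

Lemma rsum_plus n u v : rsum n (fun i => u i + v i) = rsum n u + rsum n v.
Proof. induction n; simpl; [lra|]. rewrite IHn; ring. Qed.

Lemma rsum_minus n u v : rsum n (fun i => u i - v i) = rsum n u - rsum n v.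
Proof. induction n; simpl; [lra|]. rewrite IHn; ring. Qed.

Lemma rsum_scal n c u : rsum n (fun i => c * u i) = c * rsum n u.
Proof. induction n; simpl; [lra|]. rewrite IHn; ring. Qed.

Lemma rsum_scal_r n c u : rsum n (fun i => u i * c) = rsum n u * c.
Proof. induction n; simpl; [lra|]. rewrite IHn; ring. Qed.

Lemma rsum_opp n u : rsum n (fun i => - u i) = - rsum n u.
Proof. induction n; simpl; [lra|]. rewrite IHn; ring. Qed.

Lemma rsum_const n c : rsum n (fun _ => c) = INR n * c.
Proof. induction n; simpl rsum; [simpl; lra|]. rewrite IHn, S_INR; ring. Qed.

Lemma rsum_abs n u : Rabs (rsum n u) <= rsum n (fun i => Rabs (u i)).
Proof.
  induction n; simpl; [rewrite Rabs_R0; lra|].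
  eapply Rle_trans; [apply Rabs_triang|]. lra.
Qed.

Lemma rsum_swap n m (u : nat -> nat -> R) :
  rsum n (fun i => rsum m (fun j => u i j)) = rsum m (fun j => rsum n (fun i => u i j)).
Proof.
  induction n; simpl; [rewrite rsum_const; simpl; ring|].
  rewrite IHn, <- rsum_plus. reflexivity.
Qed.

Lemma rsum_telescope n (h : nat -> R) : rsum n (fun i => h (S i) - h i) = h n - h O.
Proof. induction n; simpl; [ring|]. rewrite IHn; ring. Qed.

Lemma rsum_sum_n n u : sum_n u n = rsum (S n) u.
Proof.
  induction n; [rewrite sum_O; simpl; rewrite Rplus_0_l; reflexivity|].
  rewrite sum_Sn, IHn. reflexivity.
Qed.

Lemma rsum_shift n u : rsum (S n) u = u O + rsum n (fun i => u (S i)).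
Proof. induction n; simpl rsum in *; [ring|]. rewrite IHn. ring. Qed.

Lemma rsum_rev n u : rsum n u = rsum n (fun i => u (n - 1 - i)%nat).
Proof.
  induction n; [reflexivity|].
  change (rsum n u + u n = rsum (S n) (fun i => u (S n - 1 - i)%nat)).
  rewrite rsum_shift, IHn. replace (S n - 1 - 0)%nat with n by lia.
  rewrite Rplus_comm. f_equal. apply rsum_ext; intros. f_equal. lia.
Qed.

Lemma rsum_sq n (a : nat -> R) : rsum n a ^ 2 = rsum n (fun k => rsum n (fun l => a k * a l)).
Proof.
  simpl. rewrite Rmult_1_r, <- rsum_scal_r. apply rsum_ext; intros.
  rewrite <- rsum_scal. reflexivity.
Qed.

Lemma rsum_delta K k c : (k < K)%nat -> rsum K (fun l => if Nat.eq_dec k l then c else 0) = c.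
Proof.
  induction K; intros H; [lia|]. simpl rsum. destruct (Nat.eq_dec k K) as [->|].
  - rewrite (rsum_ext _ _ (fun _ => 0)), rsum_const; [ring|].
    intros i Hi. destruct Nat.eq_dec; [lia|auto].
  - rewrite IHK by lia. ring.
Qed.

(** * Riemann--Stieltjes sums against a nondecreasing integrator *)

Definition nondecr01 (g : R -> R) := forall x y, 0 <= x -> x <= y -> y <= 1 -> g x <= g y.

Definition lipschitz01 (f : R -> R) L := forall x y, 0 <= x <= 1 -> 0 <= y <= 1 ->
  Rabs (f x - f y) <= L * Rabs (x - y).

Definition tagged_partition n (p xi : nat -> R) d := p O = 0 /\ p n = 1 /\
  forall i, (i < n)%nat -> (p i <= xi i <= p (S i)) /\ p (S i) - p i <= d.

Definition RS_sum g f n (p xi : nat -> R) := rsum n (fun i => (g (p (S i)) - g (p i)) * f (xi i)).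

Section Partition.

Variables (n : nat) (p xi : nat -> R) (d : R).
Hypothesis Hp : tagged_partition n p xi d.

Lemma partition_mono i j : (i <= j <= n)%nat -> p i <= p j.
Proof.
  destruct Hp as [_ [_ Hcell]]. induction j; intros Hj.
  - replace i with O by lia. lra.
  - destruct (Nat.eq_dec i (S j)) as [->|]; [lra|].
    assert (p i <= p j) by (apply IHj; lia). destruct (Hcell j) as [[? ?] ?]; [lia|lra].
Qed.

Lemma partition_range i : (i <= n)%nat -> 0 <= p i <= 1.
Proof.
  intros Hi. destruct Hp as [P0 [P1 _]]. rewrite <- P0, <- P1 at 1.
  split; apply partition_mono; lia.
Qed.

Lemma partition_cell i : (i < n)%nat -> 0 <= p i <= p (S i) /\ p (S i) <= 1.
Proof.
  intros Hi. pose proof (partition_range i ltac:(lia)). pose proof (partition_range (S i) ltac:(lia)).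
  pose proof (partition_mono i (S i) ltac:(lia)). lra.
Qed.

Lemma partition_tag_range i : (i < n)%nat -> 0 <= xi i <= 1.
Proof.
  intros Hi. pose proof (partition_range i ltac:(lia)). pose proof (partition_range (S i) ltac:(lia)).
  destruct Hp as [_ [_ Hcell]]. destruct (Hcell i Hi) as [[? ?] ?]. lra.
Qed.

End Partition.

Lemma clamp_diff a b c d : a <= b -> c <= d ->
  Rmax 0 (Rmin b d - Rmax a c) = Rmin b (Rmax a d) - Rmin b (Rmax a c).
Proof. intros. unfold Rmax, Rmin. repeat destruct Rle_dec; lra. Qed.

Section Overlap.

Variable g : R -> R.
Hypothesis g_nondecr : nondecr01 g.

(* The [g]-mass of the intersection of the cells [[a, b]] and [[q j, q (S j)]]. *)
Definition overlap a b (q : nat -> R) j := Rmax 0 (Rmin (g b) (g (q (S j))) - Rmax (g a) (g (q j))).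

Lemma overlap_sum m q eta d a b : tagged_partition m q eta d -> 0 <= a <= b -> b <= 1 ->
  rsum m (overlap a b q) = g b - g a.
Proof.
  intros Hq Hab Hb. pose proof (partition_range _ _ _ _ Hq) as Rq.
  assert (Hgq : forall j, (j <= m)%nat -> g 0 <= g (q j) <= g 1).
  { intros j Hj. pose proof (Rq j Hj). split; apply g_nondecr; lra. }
  unfold overlap. rewrite (rsum_ext _ _ (fun j => Rmin (g b) (Rmax (g a) (g (q (S j)))) - Rmin (g b) (Rmax (g a) (g (q j))))).
  - rewrite (rsum_telescope m (fun j => Rmin (g b) (Rmax (g a) (g (q j))))).
    destruct Hq as [-> [-> _]].
    assert (g 0 <= g a /\ g a <= g b /\ g b <= g 1) as [? [? ?]] by (repeat split; apply g_nondecr; lra).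
    unfold Rmax, Rmin; repeat destruct Rle_dec; lra.
  - intros j Hj. apply clamp_diff; [apply g_nondecr; lra|].
    apply g_nondecr; try apply Rq; try lia. apply (partition_mono _ _ _ _ Hq); lia.
Qed.

Lemma overlap_pos_close a b q j : 0 <= a <= b -> b <= 1 -> 0 <= q j <= q (S j) -> q (S j) <= 1 ->
  0 < overlap a b q j -> q j < b /\ a < q (S j).
Proof.
  intros Ha Hb Hqj HqS Hpos. unfold overlap, Rmax at 1 in Hpos. destruct Rle_dec; [|lra].
  assert (Hg : g (q j) < g b /\ g a < g (q (S j))) by (unfold Rmin, Rmax in *; repeat destruct Rle_dec; lra).
  split.
  - destruct (Rlt_dec (q j) b) as [|N]; auto.
    assert (g b <= g (q j)) by (apply g_nondecr; lra). lra.
  - destruct (Rlt_dec a (q (S j))) as [|N]; auto.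
    assert (g (q (S j)) <= g a) by (apply g_nondecr; lra). lra.
Qed.

End Overlap.

Lemma overlap_tags_close g n p xi d1 m q eta d2 i j : nondecr01 g ->
  tagged_partition n p xi d1 -> tagged_partition m q eta d2 -> (i < n)%nat -> (j < m)%nat ->
  0 < overlap g (p i) (p (S i)) q j -> Rabs (xi i - eta j) <= d1 + d2.
Proof.
  intros Hg HP HQ Hi Hj Hpos.
  pose proof (partition_cell _ _ _ _ HP i Hi). pose proof (partition_cell _ _ _ _ HQ j Hj).
  destruct HP as [_ [_ HP]], HQ as [_ [_ HQ]].
  destruct (HP i Hi) as [[? ?] ?], (HQ j Hj) as [[? ?] ?].
  destruct (overlap_pos_close g Hg (p i) (p (S i)) q j) as [? ?]; try lra.
  apply Rabs_le. lra.
Qed.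

(* Both sums are re-expanded over the common refinement: [overlap] splits each increment of [g]
   along the cells of the other partition, and only overlapping cells, whose tags are within
   [d1 + d2] of each other, contribute. *)
Lemma RS_sum_close g f L n p xi d1 m q eta d2 : nondecr01 g -> lipschitz01 f L -> 0 <= L ->
  tagged_partition n p xi d1 -> tagged_partition m q eta d2 ->
  Rabs (RS_sum g f n p xi - RS_sum g f m q eta) <= L * (d1 + d2) * (g 1 - g 0).
Proof.
  intros Hg Hf HL HP HQ.
  set (w := fun i j => overlap g (p i) (p (S i)) q j).
  assert (Hw0 : forall i j, 0 <= w i j) by (intros; apply Rmax_l).
  assert (Hrow : forall i, (i < n)%nat -> rsum m (w i) = g (p (S i)) - g (p i)).
  { intros i Hi. destruct (partition_cell _ _ _ _ HP i Hi). apply (overlap_sum g Hg m q eta d2); auto. }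
  assert (Hcol : forall j, (j < m)%nat -> rsum n (fun i => w i j) = g (q (S j)) - g (q j)).
  { intros j Hj. destruct (partition_cell _ _ _ _ HQ j Hj).
    rewrite <- (overlap_sum g Hg n p xi d1 (q j) (q (S j))) by auto.
    apply rsum_ext. intros i _. unfold w, overlap. rewrite Rmin_comm, (Rmax_comm (g (p i))). reflexivity. }
  assert (Hdiff : RS_sum g f n p xi - RS_sum g f m q eta =
    rsum n (fun i => rsum m (fun j => w i j * (f (xi i) - f (eta j))))).
  { transitivity (rsum n (fun i => rsum m (fun j => w i j * f (xi i)))
                  - rsum m (fun j => rsum n (fun i => w i j * f (eta j)))).
    - unfold RS_sum. f_equal; apply rsum_ext.
      + intros i Hi. rewrite rsum_scal_r, Hrow by auto. reflexivity.
      + intros j Hj. rewrite rsum_scal_r, Hcol by auto. reflexivity.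
    - rewrite <- (rsum_swap n m (fun i j => w i j * f (eta j))), <- rsum_minus. apply rsum_ext. intros i _.
      rewrite <- rsum_minus. apply rsum_ext. intros j _. ring. }
  assert (Hterm : forall i j, (i < n)%nat -> (j < m)%nat ->
    Rabs (w i j * (f (xi i) - f (eta j))) <= L * (d1 + d2) * w i j).
  { intros i j Hi Hj. rewrite Rabs_mult, (Rabs_pos_eq (w i j)) by auto.
    destruct (Hw0 i j) as [Hpos|E]; [|rewrite <- E; lra].
    pose proof (overlap_tags_close g n p xi d1 m q eta d2 i j Hg HP HQ Hi Hj Hpos).
    eapply Rle_trans.
    - apply Rmult_le_compat_l; [lra|]. apply Hf.
      + apply (partition_tag_range _ _ _ _ HP i Hi).
      + apply (partition_tag_range _ _ _ _ HQ j Hj).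
    - assert (L * Rabs (xi i - eta j) <= L * (d1 + d2)) by (apply Rmult_le_compat_l; lra). nra. }
  rewrite Hdiff. eapply Rle_trans; [apply rsum_abs|].
  apply Rle_trans with (rsum n (fun i => L * (d1 + d2) * rsum m (w i))).
  - apply rsum_le. intros i Hi. eapply Rle_trans; [apply rsum_abs|].
    rewrite <- rsum_scal. apply rsum_le. auto.
  - rewrite rsum_scal, (rsum_ext _ _ _ Hrow), (rsum_telescope n (fun i => g (p i))).
    destruct HP as [-> [-> _]]. lra.
Qed.

Definition grid (N i : nat) := INR i / INR N.

Definition usum g (N : nat) f := RS_sum g f N (grid N) (grid N).

Lemma grid_partition N : (1 <= N)%nat -> tagged_partition N (grid N) (grid N) (/ INR N).
Proof.
  intros HN. assert (0 < INR N) by (apply lt_0_INR; lia). unfold tagged_partition, grid.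
  split; [|split]; [simpl; field; lra | field; lra|].
  intros i Hi. rewrite S_INR. repeat split; [lra| |right; field; lra].
  apply Rmult_le_compat_r; [left; apply Rinv_0_lt_compat|]; lra.
Qed.

Lemma grid_partition_right N : (1 <= N)%nat -> tagged_partition N (grid N) (fun i => grid N (S i)) (/ INR N).
Proof.
  intros HN. assert (0 < INR N) by (apply lt_0_INR; lia). unfold tagged_partition, grid.
  split; [|split]; [simpl; field; lra | field; lra|].
  intros i Hi. rewrite S_INR. repeat split; [|lra|right; field; lra].
  apply Rmult_le_compat_r; [left; apply Rinv_0_lt_compat|]; lra.
Qed.

Lemma RS_integral_sums (f g : R -> R) I :
  is_RS_integral (V := R_NormedModule) f g 0 1 I ->
  forall eps : posreal, exists delta : posreal, forall n p xi, tagged_partition n p xi (delta / 2) ->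
    Rabs (RS_sum g f n p xi - I) < eps.
Proof.
  intros H eps. destruct (H eps) as [delta Hd]. exists delta.
  intros n p xi [P0 [P1 P2]]. destruct n as [|n]; [rewrite P0 in P1; lra|].
  specialize (Hd (S n) p xi P0 P1). unfold RS_sum. rewrite <- rsum_sum_n.
  apply Hd. intros i Hi. destruct (P2 i Hi). pose proof (cond_pos delta). split; [auto|lra].
Qed.

Lemma inv_INR_small r : 0 < r -> exists N : nat, (1 <= N)%nat /\ forall M, (N <= M)%nat -> / INR M < r.
Proof.
  intros Hr. destruct (archimed_cor1 r Hr) as [N [H1 H2]]. exists N. split; [lia|].
  intros M HM. eapply Rle_lt_trans; [|apply H1].
  apply Rinv_le_contravar; [apply lt_0_INR; lia | apply le_INR; lia].
Qed.

Section RS_integral.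

Variables (g f : R -> R) (L : R).
Hypotheses (g_nondecr : nondecr01 g) (f_lip : lipschitz01 f L) (L_ge0 : 0 <= L).

Lemma usum_close N M : (1 <= N)%nat -> (1 <= M)%nat ->
  Rabs (usum g N f - usum g M f) <= L * (g 1 - g 0) * (/ INR N + / INR M).
Proof.
  intros HN HM. eapply Rle_trans.
  - apply (RS_sum_close g f L); auto; apply grid_partition; auto.
  - right. ring.
Qed.

Lemma small_mesh eps : 0 < eps -> exists N, (1 <= N)%nat /\
  forall M, (N <= M)%nat -> L * (g 1 - g 0) * / INR M <= eps.
Proof.
  intros He. set (K := L * (g 1 - g 0)).
  assert (0 <= K) by (apply Rmult_le_pos; [auto | pose proof (g_nondecr 0 1); lra]).
  destruct (inv_INR_small (eps / (K + 1))) as [N [HN HNs]]; [apply Rdiv_lt_0_compat; lra|].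
  exists N. split; auto. intros M HM. specialize (HNs M HM).
  assert (0 < / INR M) by (apply Rinv_0_lt_compat, lt_0_INR; lia).
  apply Rle_trans with ((K + 1) * (eps / (K + 1))); [nra | right; field; lra].
Qed.

Lemma usum_RS_integral_error I N : (1 <= N)%nat ->
  is_RS_integral (V := R_NormedModule) f g 0 1 I ->
  Rabs (usum g N f - I) <= L * (g 1 - g 0) * / INR N.
Proof.
  intros HN HI. apply Rle_plus_epsilon. intros eps Heps.
  assert (He : 0 < eps / 2) by lra.
  destruct (RS_integral_sums _ _ _ HI (mkposreal _ He)) as [delta Hd].
  destruct (small_mesh _ He) as [M1 [HM1 HM1']].
  destruct (inv_INR_small (delta / 2)) as [M2 [HM2 HM2']]; [pose proof (cond_pos delta); lra|].
  set (M := Nat.max M1 M2).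
  assert (PM : tagged_partition M (grid M) (grid M) (delta / 2)).
  { destruct (grid_partition M ltac:(lia)) as [A [B C]]. split; [|split]; auto.
    intros i Hi. destruct (C i Hi). split; auto. specialize (HM2' M ltac:(lia)). lra. }
  specialize (Hd _ _ _ PM). specialize (HM1' M ltac:(lia)). simpl in Hd.
  pose proof (usum_close N M HN ltac:(lia)) as HNM. rewrite Rmult_plus_distr_l in HNM. unfold usum in *.
  replace (RS_sum g f N (grid N) (grid N) - I) with
    ((RS_sum g f N (grid N) (grid N) - RS_sum g f M (grid M) (grid M)) + (RS_sum g f M (grid M) (grid M) - I)) by ring.
  eapply Rle_trans; [apply Rabs_triang|]. lra.
Qed.

Lemma RS_integral_of_usum l :
  (forall N, (1 <= N)%nat -> Rabs (usum g N f - l) <= L * (g 1 - g 0) * / INR N) ->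
  is_RS_integral (V := R_NormedModule) f g 0 1 l.
Proof.
  intros Hl eps. set (e := eps / 4). assert (He : 0 < e) by (unfold e; pose proof (cond_pos eps); lra).
  destruct (small_mesh e He) as [N [HN HN']].
  assert (Hd : 0 < / INR N) by (apply Rinv_0_lt_compat, lt_0_INR; lia).
  exists (mkposreal _ Hd). intros n p xi P0 P1 P2.
  destruct n as [|n]; [rewrite P0 in P1; lra|].
  change (Rabs (sum_n (fun i => (g (p (S i)) - g (p i)) * f (xi i)) n - l) < eps).
  rewrite rsum_sum_n. fold (RS_sum g f (S n) p xi).
  assert (HP : tagged_partition (S n) p xi (/ INR N)).
  { split; [|split]; auto. intros i Hi. destruct (P2 i Hi) as [? Hlt]. simpl in Hlt. split; [auto|lra]. }
  pose proof (RS_sum_close g f L _ _ _ _ _ _ _ _ g_nondecr f_lip L_ge0 HP (grid_partition N HN)) as Hclose.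
  replace (L * (/ INR N + / INR N) * (g 1 - g 0)) with (2 * (L * (g 1 - g 0) * / INR N)) in Hclose by ring.
  specialize (Hl N HN). specialize (HN' N (le_n N)). unfold usum in Hl.
  replace (RS_sum g f (S n) p xi - l) with
    ((RS_sum g f (S n) p xi - RS_sum g f N (grid N) (grid N)) + (RS_sum g f N (grid N) (grid N) - l)) by ring.
  eapply Rle_lt_trans; [apply Rabs_triang|]. unfold e in *. pose proof (cond_pos eps). lra.
Qed.

Lemma RS_integral_exists : exists I, is_RS_integral (V := R_NormedModule) f g 0 1 I.
Proof.
  set (u := fun N => usum g (S N) f).
  assert (Hc : ex_lim_seq_cauchy u).
  { intros eps. destruct (small_mesh (eps / 3)) as [N0 [_ HN0]]; [pose proof (cond_pos eps); lra|].
    exists N0. intros n m Hn Hm. eapply Rle_lt_trans; [apply usum_close; lia|].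
    pose proof (HN0 (S n) ltac:(lia)). pose proof (HN0 (S m) ltac:(lia)).
    rewrite Rmult_plus_distr_l. pose proof (cond_pos eps). lra. }
  apply ex_lim_seq_cauchy_corr, Lim_seq_correct' in Hc. apply is_lim_seq_spec in Hc.
  exists (real (Lim_seq u)). apply RS_integral_of_usum. intros N HN.
  apply Rle_plus_epsilon. intros eps Heps. assert (He : 0 < eps / 2) by lra.
  destruct (Hc (mkposreal _ He)) as [M1 HM1]. destruct (small_mesh _ He) as [M2 [_ HM2]].
  set (m := Nat.max M1 M2). specialize (HM1 m ltac:(lia)). specialize (HM2 (S m) ltac:(lia)).
  pose proof (usum_close N (S m) HN ltac:(lia)) as HNm. rewrite Rmult_plus_distr_l in HNm.
  simpl in HM1. change (u m) with (usum g (S m) f) in HM1.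
  replace (usum g N f - real (Lim_seq u)) with
    ((usum g N f - usum g (S m) f) + (usum g (S m) f - real (Lim_seq u))) by ring.
  eapply Rle_trans; [apply Rabs_triang|]. lra.
Qed.

End RS_integral.

Lemma Rabs_cos_le_1 x : Rabs (cos x) <= 1.
Proof. apply Rabs_le, COS_bound. Qed.

Lemma Rabs_sin_le_1 x : Rabs (sin x) <= 1.
Proof. apply Rabs_le, SIN_bound. Qed.

Lemma PI_gt_3 : 3 < PI.
Proof. pose proof PI2_3_2. lra. Qed.

Lemma Rabs_sin_le x : Rabs (sin x) <= Rabs x.
Proof.
  assert (Hpos : forall y, 0 <= y -> - y <= sin y <= y).
  { intros y Hy. split.
    - destruct (Rle_dec y PI); [pose proof (sin_ge_0 y Hy r) | pose proof (SIN_bound y); pose proof PI_gt_3]; lra.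
    - destruct (Req_dec y 0) as [->|]; [rewrite sin_0; lra | left; apply sin_lt_x; lra]. }
  destruct (Rle_dec 0 x).
  - rewrite (Rabs_pos_eq x) by auto. apply Rabs_le, Hpos; auto.
  - rewrite (Rabs_left x), <- (Rabs_Ropp (sin x)), <- sin_neg by lra. apply Rabs_le, Hpos. lra.
Qed.

Lemma Rabs_half a : Rabs (a / 2) = Rabs a / 2.
Proof. unfold Rdiv. rewrite Rabs_mult, (Rabs_pos_eq (/ 2)) by lra. reflexivity. Qed.

Lemma cos_lipschitz a b : Rabs (cos a - cos b) <= Rabs (a - b).
Proof.
  rewrite form2, !Rabs_mult. replace (Rabs (-2)) with 2 by (rewrite Rabs_left; lra).
  pose proof (Rabs_sin_le ((a - b) / 2)). rewrite Rabs_half in H.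
  pose proof (Rabs_sin_le_1 ((a + b) / 2)). pose proof (Rabs_pos (sin ((a - b) / 2))).
  pose proof (Rabs_pos (sin ((a + b) / 2))). nra.
Qed.

Lemma sin_lipschitz a b : Rabs (sin a - sin b) <= Rabs (a - b).
Proof.
  rewrite form4, !Rabs_mult, (Rabs_pos_eq 2) by lra.
  pose proof (Rabs_sin_le ((a - b) / 2)). rewrite Rabs_half in H.
  pose proof (Rabs_cos_le_1 ((a + b) / 2)). pose proof (Rabs_pos (sin ((a - b) / 2))).
  pose proof (Rabs_pos (cos ((a + b) / 2))). nra.
Qed.

Lemma cos_sub_1_le_sq d : 0 <= d <= 1 -> Rabs (cos d - 1) <= d * d.
Proof.
  intros Hd. pose proof PI_gt_3. destruct (cos_bound d 0 ltac:(lra) ltac:(lra)) as [Hlow _].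
  unfold cos_approx, cos_term in Hlow. simpl in Hlow. pose proof (COS_bound d).
  apply Rabs_le. lra.
Qed.

Lemma sin_sub_id_le_sq d : 0 <= d <= 1 -> Rabs (sin d - d) <= d * d.
Proof.
  intros Hd. pose proof PI_gt_3. destruct (sin_bound d 0 ltac:(lra) ltac:(lra)) as [Hlow _].
  unfold sin_approx, sin_term in Hlow. simpl in Hlow.
  pose proof (Rabs_sin_le d). rewrite (Rabs_pos_eq d) in H0 by lra. pose proof (Rle_abs (sin d)).
  apply Rabs_le. nra.
Qed.

Lemma cos_lt_1 t : 0 < t < 2 * PI -> cos t < 1.
Proof.
  intros Ht. rewrite <- cos_0. destruct (Rle_dec t PI).
  - apply cos_decreasing_1; lra.
  - replace t with (- (2 * PI - t) + 2 * INR 1 * PI) by (simpl; ring).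
    rewrite cos_period, <- cos_sym. apply cos_decreasing_1; lra.
Qed.

Lemma cos_2PI_far r u : 0 < r <= 1/2 -> r <= Rabs u <= 1 - r -> cos (2 * PI * u) <= cos (2 * PI * r).
Proof.
  intros Hr Hu. pose proof PI_RGT_0.
  assert (Hdecr : forall x y, 0 <= x -> x <= y -> y <= PI -> cos y <= cos x).
  { intros x y ? ? ?. destruct (Req_dec x y) as [->|]; [lra|]. left; apply cos_decreasing_1; lra. }
  replace (cos (2 * PI * u)) with (cos (2 * PI * Rabs u)).
  2:{ unfold Rabs; destruct Rcase_abs; auto. rewrite (cos_sym (2 * PI * u)). f_equal; ring. }
  destruct (Rle_dec (Rabs u) (1/2)).
  - apply Hdecr; nra.
  - replace (2 * PI * Rabs u) with (- (2 * PI * (1 - Rabs u)) + 2 * INR 1 * PI) by (simpl; ring).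
    rewrite cos_period, <- cos_sym. apply Hdecr; nra.
Qed.

(** * The Fejér kernel *)

Definition cos_sum K g t := rsum K (fun k => cos (g + INR k * t)).
Definition sin_sum K g t := rsum K (fun k => sin (g + INR k * t)).

Lemma cos_sin_sum_telescope K g t :
  cos_sum K g t * (cos t - 1) - sin_sum K g t * sin t = cos (g + INR K * t) - cos g /\
  cos_sum K g t * sin t + sin_sum K g t * (cos t - 1) = sin (g + INR K * t) - sin g.
Proof.
  unfold cos_sum, sin_sum. induction K as [|K [H1 H2]]; simpl rsum.
  - simpl INR. replace (g + 0 * t) with g by ring. split; ring.
  - rewrite S_INR. replace (g + (INR K + 1) * t) with ((g + INR K * t) + t) by ring.
    rewrite (cos_plus (g + INR K * t) t), (sin_plus (g + INR K * t) t). split; lra.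
Qed.

Lemma cos_sin_sum_sq K g t : (cos_sum K g t ^ 2 + sin_sum K g t ^ 2) * (2 - 2 * cos t) =
  (cos (g + INR K * t) - cos g) ^ 2 + (sin (g + INR K * t) - sin g) ^ 2.
Proof.
  destruct (cos_sin_sum_telescope K g t) as [H1 H2]. rewrite <- H1, <- H2.
  pose proof (sin2_cos2 t). unfold Rsqr in H. nra.
Qed.

Lemma cos_sin_sum_sq_bound K g t : cos t < 1 ->
  cos_sum K g t ^ 2 + sin_sum K g t ^ 2 <= 4 / (2 - 2 * cos t).
Proof.
  intros Hc. pose proof (cos_sin_sum_sq K g t) as E.
  set (a := g + INR K * t) in E.
  assert ((cos a - cos g) ^ 2 + (sin a - sin g) ^ 2 <= 4).
  { pose proof (sin2_cos2 a). pose proof (sin2_cos2 g). unfold Rsqr in *.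
    pose proof (pow2_ge_0 (cos a + cos g)). pose proof (pow2_ge_0 (sin a + sin g)). nra. }
  apply Rmult_le_reg_r with (2 - 2 * cos t); [lra|].
  unfold Rdiv. rewrite Rmult_assoc, Rinv_l by lra. lra.
Qed.

Lemma cos_sum_full_turn K m gm : (0 < m < K)%nat -> cos_sum K gm (2 * PI * INR m / INR K) = 0.
Proof.
  intros Hm. assert (HK : 0 < INR K) by (apply lt_0_INR; lia).
  assert (Hturn : gm + INR K * (2 * PI * INR m / INR K) = gm + 2 * INR m * PI) by (field; lra).
  pose proof (cos_sin_sum_sq K gm (2 * PI * INR m / INR K)) as E.
  rewrite Hturn, cos_period, sin_period in E.
  assert (Hc : cos (2 * PI * INR m / INR K) < 1).
  { apply cos_lt_1. pose proof PI_RGT_0. assert (0 < INR m < INR K) by (split; [apply lt_0_INR | apply lt_INR]; lia).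
    split; [apply Rdiv_lt_0_compat; nra|].
    apply (Rmult_lt_reg_r (INR K)); [lra|]. unfold Rdiv. rewrite Rmult_assoc, Rinv_l by lra. nra. }
  set (c := cos_sum K gm _) in *. set (s := sin_sum K gm _) in *.
  assert (c ^ 2 + s ^ 2 = 0).
  { apply Rmult_eq_reg_r with (2 - 2 * cos (2 * PI * INR m / INR K)); [lra|lra]. }
  pose proof (pow2_ge_0 c). pose proof (pow2_ge_0 s). simpl in *. nra.
Qed.

(* Fejér kernel of order [K]: [|sum_{k<K} e^{2 pi i k u}|^2 / K]. *)
Definition fejer K u := / INR K * (cos_sum K 0 (2 * PI * u) ^ 2 + sin_sum K 0 (2 * PI * u) ^ 2).

Lemma fejer_ge0 K u : 0 <= fejer K u.
Proof.
  unfold fejer. apply Rmult_le_pos.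
  - destruct K; [simpl; rewrite Rinv_0; lra|]. left; apply Rinv_0_lt_compat, lt_0_INR; lia.
  - pose proof (pow2_ge_0 (cos_sum K 0 (2 * PI * u))). pose proof (pow2_ge_0 (sin_sum K 0 (2 * PI * u))). lra.
Qed.

Lemma fejer_expand K u :
  fejer K u = / INR K * rsum K (fun k => rsum K (fun l => cos ((INR k - INR l) * (2 * PI * u)))).
Proof.
  unfold fejer, cos_sum, sin_sum. rewrite !rsum_sq, <- rsum_plus. f_equal.
  apply rsum_ext; intros k _. rewrite <- rsum_plus. apply rsum_ext; intros l _.
  replace ((INR k - INR l) * (2 * PI * u)) with ((0 + INR k * (2 * PI * u)) - (0 + INR l * (2 * PI * u))) by ring.
  rewrite cos_minus. ring.
Qed.

Lemma fejer_far K u r : (1 <= K)%nat -> 0 < r <= 1/2 -> r <= Rabs u <= 1 - r ->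
  fejer K u <= 2 / (INR K * (1 - cos (2 * PI * r))).
Proof.
  intros HK Hr Hu. assert (HKp : 0 < INR K) by (apply lt_0_INR; lia).
  pose proof (cos_2PI_far r u Hr Hu) as Hcu.
  assert (Hcr : cos (2 * PI * r) < 1) by (apply cos_lt_1; pose proof PI_RGT_0; nra).
  unfold fejer. eapply Rle_trans.
  - apply Rmult_le_compat_l; [left; apply Rinv_0_lt_compat; lra|]. apply cos_sin_sum_sq_bound. lra.
  - apply Rle_trans with (/ INR K * (4 / (2 - 2 * cos (2 * PI * r)))).
    + apply Rmult_le_compat_l; [left; apply Rinv_0_lt_compat; lra|].
      unfold Rdiv. apply Rmult_le_compat_l; [lra|]. apply Rinv_le_contravar; lra.
    + right. field. lra.
Qed.

Lemma cos_grid_sum K k l x : (1 <= K)%nat -> (k < K)%nat -> (l < K)%nat ->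
  rsum K (fun j => cos ((INR k - INR l) * (2 * PI * (x - INR j / INR K)))) =
  if Nat.eq_dec k l then INR K else 0.
Proof.
  intros HK Hk Hl. assert (HKp : 0 < INR K) by (apply lt_0_INR; lia).
  destruct (Nat.eq_dec k l) as [->|Hkl].
  - rewrite (rsum_ext _ _ (fun _ => 1)), rsum_const; [ring|].
    intros j _. rewrite Rminus_diag, Rmult_0_l. apply cos_0.
  - set (gm := (INR k - INR l) * (2 * PI * x)).
    destruct (Nat.lt_ge_cases l k) as [Hlk|Hkl'].
    + rewrite <- (cos_sum_full_turn K (k - l) (- gm)) by lia. unfold cos_sum.
      apply rsum_ext. intros j _. rewrite <- cos_neg. f_equal. unfold gm.
      rewrite minus_INR by lia. field. lra.
    + rewrite <- (cos_sum_full_turn K (l - k) gm) by lia. unfold cos_sum.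
      apply rsum_ext. intros j _. f_equal. unfold gm. rewrite minus_INR by lia. field. lra.
Qed.

Lemma fejer_grid_mean K x : (1 <= K)%nat -> / INR K * rsum K (fun j => fejer K (x - INR j / INR K)) = 1.
Proof.
  intros HK. assert (HKp : 0 < INR K) by (apply lt_0_INR; lia).
  rewrite (rsum_ext _ _ (fun j => / INR K * rsum K (fun k => rsum K (fun l =>
    cos ((INR k - INR l) * (2 * PI * (x - INR j / INR K))))))) by (intros; apply fejer_expand).
  rewrite rsum_scal, rsum_swap.
  rewrite (rsum_ext _ _ (fun k => INR K)).
  - rewrite rsum_const. field. lra.
  - intros k Hk. rewrite rsum_swap.
    rewrite (rsum_ext _ _ (fun l => if Nat.eq_dec k l then INR K else 0)) by (intros; apply cos_grid_sum; auto).
    apply rsum_delta; auto.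
Qed.

Definition fejer_mean K (phi : R -> R) x :=
  / INR K * rsum K (fun j => phi (INR j / INR K) * fejer K (x - INR j / INR K)).

Lemma grid_in_01 K j : (j < K)%nat -> 0 <= INR j / INR K < 1.
Proof.
  intros Hj. assert (0 < INR K) by (apply lt_0_INR; lia).
  assert (INR j < INR K) by (apply lt_INR; lia). pose proof (pos_INR j). split.
  - apply Rdiv_le_0_compat; lra.
  - apply (Rmult_lt_reg_r (INR K)); auto. unfold Rdiv. rewrite Rmult_assoc, Rinv_l; lra.
Qed.

Section Fejer_mean.

Variables (K : nat) (phi : R -> R).
Hypotheses (K_ge1 : (1 <= K)%nat) (phi_bounded : forall y, 0 <= y <= 1 -> Rabs (phi y) <= 1).

Lemma fejer_mean_bound x : Rabs (fejer_mean K phi x) <= 1.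
Proof.
  assert (0 < / INR K) by (apply Rinv_0_lt_compat, lt_0_INR; lia).
  unfold fejer_mean. rewrite Rabs_mult, Rabs_pos_eq, <- (fejer_grid_mean K x K_ge1) by lra.
  apply Rmult_le_compat_l; [lra|]. eapply Rle_trans; [apply rsum_abs|]. apply rsum_le. intros j Hj.
  rewrite Rabs_mult, (Rabs_pos_eq (fejer _ _)) by apply fejer_ge0.
  pose proof (fejer_ge0 K (x - INR j / INR K)). pose proof (grid_in_01 K j Hj).
  pose proof (phi_bounded (INR j / INR K) ltac:(lra)). nra.
Qed.

Lemma fejer_mean_error_eq x : phi x - fejer_mean K phi x =
  / INR K * rsum K (fun j => (phi x - phi (INR j / INR K)) * fejer K (x - INR j / INR K)).
Proof.
  assert (E : phi x = / INR K * rsum K (fun j => phi x * fejer K (x - INR j / INR K))).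
  { rewrite rsum_scal, <- Rmult_assoc, (Rmult_comm (/ INR K)), Rmult_assoc, fejer_grid_mean by auto. ring. }
  unfold fejer_mean. rewrite E at 1. rewrite <- Rmult_minus_distr_l, <- rsum_minus.
  f_equal. apply rsum_ext. intros. ring.
Qed.

(* Away from the endpoints, the Fejér mean reproduces a Lipschitz function: grid points within
   [r] of [x] cost [Lp * r], the others are damped by the decay of the kernel. *)
Lemma fejer_mean_approx Lp r eta x : 0 < r <= eta -> r <= 1/2 -> eta <= x <= 1 - eta ->
  0 <= Lp -> lipschitz01 phi Lp ->
  Rabs (phi x - fejer_mean K phi x) <= Lp * r + 4 / (INR K * (1 - cos (2 * PI * r))).
Proof.
  intros Hr Hr2 Hx HLp Hlip.
  assert (HKp : 0 < INR K) by (apply lt_0_INR; lia).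
  assert (HKi : 0 < / INR K) by (apply Rinv_0_lt_compat; lra).
  assert (Hc : cos (2 * PI * r) < 1) by (apply cos_lt_1; pose proof PI_RGT_0; nra).
  set (c := 4 / (INR K * (1 - cos (2 * PI * r)))).
  assert (Hc0 : 0 < c) by (apply Rdiv_lt_0_compat; [lra|apply Rmult_lt_0_compat; lra]).
  set (xj := fun j => INR j / INR K).
  assert (Hterm : forall j, (j < K)%nat ->
    Rabs ((phi x - phi (xj j)) * fejer K (x - xj j)) <= Lp * r * fejer K (x - xj j) + c).
  { intros j Hj. pose proof (grid_in_01 K j Hj). fold (xj j) in H.
    rewrite Rabs_mult, (Rabs_pos_eq (fejer _ _)) by apply fejer_ge0.
    pose proof (fejer_ge0 K (x - xj j)).
    destruct (Rle_dec (Rabs (x - xj j)) r).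
    - assert (Rabs (phi x - phi (xj j)) <= Lp * r).
      { eapply Rle_trans; [apply Hlip; lra|]. apply Rmult_le_compat_l; lra. }
      nra.
    - assert (Hfar : fejer K (x - xj j) <= c / 2).
      { unfold c. replace (4 / (INR K * (1 - cos (2 * PI * r))) / 2) with (2 / (INR K * (1 - cos (2 * PI * r))))
          by (field; lra).
        apply fejer_far; auto; [lra|]. split; [lra|]. apply Rabs_le. lra. }
      assert (Rabs (phi x - phi (xj j)) <= 2).
      { pose proof (phi_bounded x ltac:(lra)). pose proof (phi_bounded (xj j) ltac:(lra)).
        eapply Rle_trans; [apply Rabs_triang|]. rewrite Rabs_Ropp. lra. }
      assert (0 <= Lp * r * fejer K (x - xj j)) by (apply Rmult_le_pos; [apply Rmult_le_pos|]; lra).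
      pose proof (Rabs_pos (phi x - phi (xj j))). nra. }
  rewrite fejer_mean_error_eq, Rabs_mult, Rabs_pos_eq by lra.
  apply Rle_trans with (/ INR K * rsum K (fun j => Lp * r * fejer K (x - xj j) + c)).
  - apply Rmult_le_compat_l; [lra|]. eapply Rle_trans; [apply rsum_abs|]. apply rsum_le. auto.
  - rewrite rsum_plus, rsum_const, rsum_scal, Rmult_plus_distr_l.
    rewrite <- Rmult_assoc, (Rmult_comm (/ INR K)), Rmult_assoc. unfold xj. rewrite fejer_grid_mean by auto.
    right. field. lra.
Qed.

End Fejer_mean.

Lemma grid_range N i : (1 <= N)%nat -> (i <= N)%nat -> 0 <= grid N i <= 1.
Proof. intros. apply (partition_range _ _ _ _ (grid_partition N H)); auto. Qed.

Lemma grid_S N i : (1 <= N)%nat -> grid N (S i) = grid N i + / INR N.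
Proof. intros. unfold grid. rewrite S_INR. field. apply not_0_INR. lia. Qed.

Section Uniform_sums.

Variables (g : R -> R) (N : nat).
Hypotheses (g_nondecr : nondecr01 g) (N_ge1 : (1 <= N)%nat).

Lemma usum_ext f h : (forall x, 0 <= x <= 1 -> f x = h x) -> usum g N f = usum g N h.
Proof. intros H. unfold usum, RS_sum. apply rsum_ext. intros i Hi. rewrite H; auto. apply grid_range; lia. Qed.

Lemma usum_plus f h : usum g N (fun x => f x + h x) = usum g N f + usum g N h.
Proof. unfold usum, RS_sum. rewrite <- rsum_plus. apply rsum_ext; intros; ring. Qed.

Lemma usum_scal c f : usum g N (fun x => c * f x) = c * usum g N f.
Proof. unfold usum, RS_sum. rewrite <- rsum_scal. apply rsum_ext; intros; ring. Qed.

Lemma usum_minus f h : usum g N (fun x => f x - h x) = usum g N f - usum g N h.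
Proof. unfold usum, RS_sum. rewrite <- rsum_minus. apply rsum_ext; intros; ring. Qed.

Lemma usum_rsum J (F : nat -> R -> R) : usum g N (fun x => rsum J (fun j => F j x)) = rsum J (fun j => usum g N (F j)).
Proof. unfold usum, RS_sum. rewrite rsum_swap. apply rsum_ext. intros. rewrite <- rsum_scal. reflexivity. Qed.

Lemma usum_const c : usum g N (fun _ => c) = c * (g 1 - g 0).
Proof.
  unfold usum, RS_sum. rewrite rsum_scal_r, (rsum_telescope N (fun i => g (grid N i))).
  unfold grid. replace (INR N / INR N) with 1 by (field; apply not_0_INR; lia).
  replace (INR 0 / INR N) with 0 by (simpl; field; apply not_0_INR; lia). ring.
Qed.

Lemma grid_increment_ge0 i : (i < N)%nat -> 0 <= g (grid N (S i)) - g (grid N i).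
Proof.
  intros Hi. pose proof (grid_range N i N_ge1 ltac:(lia)). pose proof (grid_range N (S i) N_ge1 Hi).
  rewrite grid_S in * by auto.
  assert (0 < / INR N) by (apply Rinv_0_lt_compat, lt_0_INR; lia).
  pose proof (g_nondecr (grid N i) (grid N i + / INR N)). lra.
Qed.

Lemma usum_abs_le f h : (forall x, 0 <= x <= 1 -> Rabs (f x) <= h x) -> Rabs (usum g N f) <= usum g N h.
Proof.
  intros H. unfold usum, RS_sum. eapply Rle_trans; [apply rsum_abs|]. apply rsum_le. intros i Hi.
  rewrite Rabs_mult, Rabs_pos_eq by (apply grid_increment_ge0; auto).
  apply Rmult_le_compat_l; [apply grid_increment_ge0; auto|]. apply H, grid_range; lia.
Qed.

Definition indicator_lt c x := if Rlt_dec x c then 1 else 0.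
Definition indicator_gt c x := if Rlt_dec c x then 1 else 0.

Lemma usum_indicator_lt c : 0 <= c -> c + / INR N <= 1 -> usum g N (indicator_lt c) <= g (c + / INR N) - g 0.
Proof.
  intros Hc Hc1. assert (HNi : 0 < / INR N) by (apply Rinv_0_lt_compat, lt_0_INR; lia).
  set (partial n := rsum n (fun i => (g (grid N (S i)) - g (grid N i)) * indicator_lt c (grid N i))).
  assert (Hind : forall n, (n <= N)%nat -> partial n <= g (grid N n) - g 0 /\ partial n <= g (c + / INR N) - g 0).
  { induction n as [|n IH]; intros Hn; unfold partial in *; simpl rsum.
    - unfold grid. simpl. replace (0 / INR N) with 0 by (field; apply not_0_INR; lia).
      pose proof (g_nondecr 0 (c + / INR N)). lra.
    - destruct (IH ltac:(lia)) as [I1 I2].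
      pose proof (grid_range N n N_ge1 ltac:(lia)). pose proof (grid_range N (S n) N_ge1 Hn).
      pose proof (grid_S N n N_ge1). unfold indicator_lt at 2 4. destruct (Rlt_dec (grid N n) c).
      + assert (g (grid N (S n)) <= g (c + / INR N)) by (apply g_nondecr; lra). lra.
      + assert (g (grid N n) <= g (grid N (S n))) by (apply g_nondecr; lra). lra. }
  apply (Hind N ltac:(lia)).
Qed.

Lemma usum_indicator_gt c : 0 <= c <= 1 -> usum g N (indicator_gt c) <= g 1 - g c.
Proof.
  intros Hc. assert (HNi : 0 < / INR N) by (apply Rinv_0_lt_compat, lt_0_INR; lia).
  set (partial n := rsum n (fun i => (g (grid N (S i)) - g (grid N i)) * indicator_gt c (grid N i))).
  assert (Hind : forall n, (n <= N)%nat -> partial n <= Rmax 0 (g (grid N n) - g c)).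
  { induction n as [|n IH]; intros Hn; unfold partial in *; simpl rsum; [apply Rmax_l|].
    specialize (IH ltac:(lia)).
    pose proof (grid_range N n N_ge1 ltac:(lia)). pose proof (grid_range N (S n) N_ge1 Hn).
    pose proof (grid_S N n N_ge1). unfold indicator_gt at 2. destruct (Rlt_dec c (grid N n)).
    + assert (g c <= g (grid N n)) by (apply g_nondecr; lra).
      assert (g (grid N n) <= g (grid N (S n))) by (apply g_nondecr; lra).
      rewrite Rmax_right in IH by lra. rewrite Rmax_right by lra. lra.
    + assert (g (grid N n) <= g c) by (apply g_nondecr; lra). rewrite Rmax_left in IH by lra.
      pose proof (Rmax_l 0 (g (grid N (S n)) - g c)). lra. }
  eapply Rle_trans; [apply (Hind N ltac:(lia))|].
  unfold grid. replace (INR N / INR N) with 1 by (field; apply not_0_INR; lia).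
  pose proof (g_nondecr c 1). unfold Rmax; destruct Rle_dec; lra.
Qed.

End Uniform_sums.

Lemma usum_endpoint_bound g N f e B eta : nondecr01 g -> (1 <= N)%nat -> 0 <= e -> 0 <= B ->
  0 <= eta -> eta + / INR N <= 1 -> eta <= 1 ->
  (forall x, 0 <= x <= 1 -> Rabs (f x) <= B) -> (forall x, eta <= x <= 1 - eta -> Rabs (f x) <= e) ->
  Rabs (usum g N f) <= e * (g 1 - g 0) + B * (g (eta + / INR N) - g 0) + B * (g 1 - g (1 - eta)).
Proof.
  intros Hg HN He HB Heta Heta1 Heta2 Hall Hmid.
  eapply Rle_trans.
  - apply (usum_abs_le g N Hg HN f (fun x => e + B * indicator_lt eta x + B * indicator_gt (1 - eta) x)).
    intros x Hx. unfold indicator_lt, indicator_gt.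
    destruct (Rlt_dec x eta); [pose proof (Hall x Hx); destruct Rlt_dec; nra|].
    destruct (Rlt_dec (1 - eta) x); [pose proof (Hall x Hx); nra|].
    pose proof (Hmid x ltac:(lra)). lra.
  - rewrite !usum_plus, !usum_scal, usum_const by auto.
    pose proof (usum_indicator_lt g N Hg HN eta Heta Heta1).
    pose proof (usum_indicator_gt g N Hg HN (1 - eta) ltac:(lra)).
    apply Rplus_le_compat; [apply Rplus_le_compat_l|]; apply Rmult_le_compat_l; lra.
Qed.

(** * Fejér approximation of modulated oscillations *)

Lemma lipschitz01_weaken f L L' : lipschitz01 f L -> L <= L' -> lipschitz01 f L'.
Proof.
  intros H HL x y Hx Hy. eapply Rle_trans; [apply H; auto|].
  apply Rmult_le_compat_r; [apply Rabs_pos|auto].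
Qed.

Lemma lipschitz01_cos_affine a b : lipschitz01 (fun x => cos (a * x + b)) (Rabs a).
Proof.
  intros x y _ _. eapply Rle_trans; [apply cos_lipschitz|].
  right. rewrite <- Rabs_mult. f_equal. ring.
Qed.

Lemma lipschitz01_sin_affine a b : lipschitz01 (fun x => sin (a * x + b)) (Rabs a).
Proof.
  intros x y _ _. eapply Rle_trans; [apply sin_lipschitz|].
  right. rewrite <- Rabs_mult. f_equal. ring.
Qed.

Lemma Rabs_rotation_le a u v : Rabs (cos a * u - sin a * v) <= Rabs u + Rabs v.
Proof.
  eapply Rle_trans; [apply Rabs_triang|]. rewrite Rabs_Ropp, !Rabs_mult.
  pose proof (Rabs_cos_le_1 a). pose proof (Rabs_sin_le_1 a).
  pose proof (Rabs_pos u). pose proof (Rabs_pos v). pose proof (Rabs_pos (cos a)). pose proof (Rabs_pos (sin a)). nra.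
Qed.

Lemma usum_cos_shift_le g N m gm : (1 <= N)%nat ->
  Rabs (usum g N (fun x => cos (2 * PI * INR m * x + gm))) <=
  Rabs (usum g N (fun x => cos (2 * PI * INR m * x))) + Rabs (usum g N (fun x => sin (2 * PI * INR m * x))).
Proof.
  intros HN.
  rewrite (usum_ext g N HN _ (fun x => cos gm * cos (2 * PI * INR m * x) - sin gm * sin (2 * PI * INR m * x)))
    by (intros; rewrite cos_plus; ring).
  rewrite usum_minus, !usum_scal. apply Rabs_rotation_le.
Qed.

Definition fejer_modulated n K (psi : R -> R) x :=
  cos (2 * PI * INR n * x) * fejer_mean K (fun y => cos (psi y)) x
  - sin (2 * PI * INR n * x) * fejer_mean K (fun y => sin (psi y)) x.

(* [cos (2 pi n x + psi x)], with [cos psi] and [sin psi] replaced by their Fejér means, expands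
   into the frequencies [n + k - l] with [k, l < K]. *)
Definition fejer_product_term n K (psi : R -> R) j k l x :=
  / 2 * (cos (2 * PI * INR (n + k - l) * x + (psi (INR j / INR K) - (INR k - INR l) * (2 * PI * (INR j / INR K)))) +
         cos (2 * PI * INR (n + l - k) * x + (psi (INR j / INR K) + (INR k - INR l) * (2 * PI * (INR j / INR K))))).

Lemma fejer_product_expand n K psi x : (K <= n)%nat ->
  fejer_modulated n K psi x
  = / INR K * rsum K (fun j => / INR K * rsum K (fun k => rsum K (fun l => fejer_product_term n K psi j k l x))).
Proof.
  intros HKn. unfold fejer_modulated, fejer_mean.
  transitivity (/ INR K *
    (rsum K (fun j => cos (2 * PI * INR n * x) * (cos (psi (INR j / INR K)) * fejer K (x - INR j / INR K)))
     - rsum K (fun j => sin (2 * PI * INR n * x) * (sin (psi (INR j / INR K)) * fejer K (x - INR j / INR K))))).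
  { rewrite !rsum_scal. ring. }
  rewrite <- rsum_minus. f_equal. apply rsum_ext. intros j _.
  set (xj := INR j / INR K). set (A := 2 * PI * INR n * x + psi xj).
  transitivity (cos A * fejer K (x - xj)); [unfold A; rewrite cos_plus; ring|].
  rewrite fejer_expand, <- Rmult_assoc, (Rmult_comm (cos A)), Rmult_assoc. f_equal.
  rewrite <- rsum_scal. apply rsum_ext. intros k Hk. rewrite <- rsum_scal. apply rsum_ext. intros l Hl.
  set (B := (INR k - INR l) * (2 * PI * (x - xj))).
  assert (E1 : 2 * PI * INR (n + k - l) * x + (psi xj - (INR k - INR l) * (2 * PI * xj)) = A + B)
    by (unfold A, B; rewrite minus_INR, plus_INR by lia; ring).
  assert (E2 : 2 * PI * INR (n + l - k) * x + (psi xj + (INR k - INR l) * (2 * PI * xj)) = A - B)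
    by (unfold A, B; rewrite minus_INR, plus_INR by lia; ring).
  unfold fejer_product_term. fold xj. rewrite E1, E2, cos_plus, cos_minus. field.
Qed.

Lemma fejer_modulated_error n K psi x : (1 <= K)%nat ->
  Rabs (cos (2 * PI * INR n * x + psi x) - fejer_modulated n K psi x) <=
  Rabs (cos (psi x) - fejer_mean K (fun y => cos (psi y)) x) + Rabs (sin (psi x) - fejer_mean K (fun y => sin (psi y)) x).
Proof.
  intros HK. unfold fejer_modulated. rewrite cos_plus.
  replace (_ - _) with (cos (2 * PI * INR n * x) * (cos (psi x) - fejer_mean K (fun y => cos (psi y)) x)
    - sin (2 * PI * INR n * x) * (sin (psi x) - fejer_mean K (fun y => sin (psi y)) x)) by ring.
  apply Rabs_rotation_le.
Qed.

Lemma fejer_mean_error_le_2 K phi x : (1 <= K)%nat -> Rabs (phi x) <= 1 ->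
  (forall y, 0 <= y <= 1 -> Rabs (phi y) <= 1) -> Rabs (phi x - fejer_mean K phi x) <= 2.
Proof.
  intros HK Hx Hphi. eapply Rle_trans; [apply Rabs_triang|]. rewrite Rabs_Ropp.
  pose proof (fejer_mean_bound K phi HK Hphi x). lra.
Qed.

Lemma usum_fejer_modulated_le g N n K psi E : (1 <= K)%nat -> (K <= n)%nat ->
  (forall m gm, (n - K <= m <= n + K)%nat -> Rabs (usum g N (fun x => cos (2 * PI * INR m * x + gm))) <= E) ->
  Rabs (usum g N (fejer_modulated n K psi)) <= INR K * E.
Proof.
  intros HK HKn Hwin. assert (HKp : 0 < INR K) by (apply lt_0_INR; lia).
  assert (HKi : 0 < / INR K) by (apply Rinv_0_lt_compat; lra).
  assert (Hterm : forall j k l, (k < K)%nat -> (l < K)%nat ->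
    Rabs (usum g N (fejer_product_term n K psi j k l)) <= E).
  { intros j k l Hk Hl. unfold fejer_product_term. rewrite usum_scal, usum_plus, Rabs_mult, Rabs_pos_eq by lra.
    eapply Rle_trans; [apply Rmult_le_compat_l; [lra|apply Rabs_triang]|].
    pose proof (Hwin (n + k - l)%nat (psi (INR j / INR K) - (INR k - INR l) * (2 * PI * (INR j / INR K))) ltac:(lia)).
    pose proof (Hwin (n + l - k)%nat (psi (INR j / INR K) + (INR k - INR l) * (2 * PI * (INR j / INR K))) ltac:(lia)).
    lra. }
  replace (usum g N (fejer_modulated n K psi)) with (usum g N (fun x =>
    / INR K * rsum K (fun j => / INR K * rsum K (fun k => rsum K (fun l => fejer_product_term n K psi j k l x)))))
    by (unfold usum, RS_sum; apply rsum_ext; intros; rewrite fejer_product_expand by auto; reflexivity).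
  rewrite usum_scal, usum_rsum, Rabs_mult, Rabs_pos_eq by lra.
  apply Rle_trans with (/ INR K * rsum K (fun j => / INR K * rsum K (fun k => rsum K (fun l => E)))).
  - apply Rmult_le_compat_l; [lra|]. eapply Rle_trans; [apply rsum_abs|]. apply rsum_le. intros j Hj.
    rewrite usum_scal, usum_rsum, Rabs_mult, Rabs_pos_eq by lra.
    apply Rmult_le_compat_l; [lra|]. eapply Rle_trans; [apply rsum_abs|]. apply rsum_le. intros k Hk.
    rewrite usum_rsum. eapply Rle_trans; [apply rsum_abs|]. apply rsum_le. intros l Hl. auto.
  - right. rewrite !rsum_const. field. lra.
Qed.

Lemma fejer_modulated_error_le_4 n K s al x : (1 <= K)%nat ->
  Rabs (cos (2 * PI * INR n * x + (s * x + al)) - fejer_modulated n K (fun y => s * y + al) x) <= 4.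
Proof.
  intros HK. eapply Rle_trans; [apply (fejer_modulated_error n K (fun y => s * y + al) x); auto|].
  pose proof (fejer_mean_error_le_2 K (fun y => cos (s * y + al)) x HK (Rabs_cos_le_1 _) (fun y _ => Rabs_cos_le_1 _)).
  pose proof (fejer_mean_error_le_2 K (fun y => sin (s * y + al)) x HK (Rabs_sin_le_1 _) (fun y _ => Rabs_sin_le_1 _)).
  lra.
Qed.

Lemma fejer_modulated_error_mid n K s al r eta x : (1 <= K)%nat -> 0 <= s <= 2 * PI ->
  0 < r <= eta -> r <= 1/2 -> eta <= x <= 1 - eta ->
  Rabs (cos (2 * PI * INR n * x + (s * x + al)) - fejer_modulated n K (fun y => s * y + al) x) <=
  2 * (2 * PI * r + 4 / (INR K * (1 - cos (2 * PI * r)))).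
Proof.
  intros HK Hs Hr Hr2 Hx. pose proof PI_RGT_0.
  assert (Hcos : lipschitz01 (fun y => cos (s * y + al)) (2 * PI))
    by (apply lipschitz01_weaken with (Rabs s); [apply lipschitz01_cos_affine | rewrite Rabs_pos_eq; lra]).
  assert (Hsin : lipschitz01 (fun y => sin (s * y + al)) (2 * PI))
    by (apply lipschitz01_weaken with (Rabs s); [apply lipschitz01_sin_affine | rewrite Rabs_pos_eq; lra]).
  eapply Rle_trans; [apply (fejer_modulated_error n K (fun y => s * y + al) x); auto|].
  pose proof (fejer_mean_approx K _ HK (fun y _ => Rabs_cos_le_1 (s * y + al)) (2 * PI) r eta x Hr Hr2 Hx
    ltac:(lra) Hcos).
  pose proof (fejer_mean_approx K _ HK (fun y _ => Rabs_sin_le_1 (s * y + al)) (2 * PI) r eta x Hr Hr2 Hx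
    ltac:(lra) Hsin).
  simpl in *. lra.
Qed.

Lemma nat_frequency_split t M : 2 * PI * (INR M + 1) < t ->
  exists n s, t = 2 * PI * INR n + s /\ 0 <= s < 2 * PI /\ (M <= n)%nat.
Proof.
  intros Ht. pose proof PI_RGT_0. set (y := t / (2 * PI)).
  assert (Hy : INR M + 1 < y).
  { unfold y. apply (Rmult_lt_reg_l (2 * PI)); [lra|]. replace (2 * PI * (t / (2 * PI))) with t by (field; lra). lra. }
  destruct (base_Int_part y) as [B1 B2].
  assert (Hz : (0 <= Int_part y)%Z) by (assert (-1 < Int_part y)%Z by (apply lt_IZR; pose proof (pos_INR M); lra); lia).
  set (n := Z.to_nat (Int_part y)).
  assert (Hn : INR n = IZR (Int_part y)) by (unfold n; rewrite INR_IZR_INZ, Z2Nat.id; auto).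
  exists n, (t - 2 * PI * INR n). split; [ring|]. split.
  - assert (Ey : t = 2 * PI * y) by (unfold y; field; lra). rewrite Ey, Hn. split; nra.
  - assert (INR M < INR n + 1) by lra. rewrite <- S_INR in H0. apply INR_lt in H0. lia.
Qed.

Lemma exists_small_radius eta e : 0 < eta -> 0 < e -> exists r, 0 < r <= eta /\ 2 * PI * r <= e.
Proof.
  intros Heta He. pose proof PI_RGT_0. exists (Rmin eta (e / (2 * PI))).
  pose proof (Rmin_l eta (e / (2 * PI))). pose proof (Rmin_r eta (e / (2 * PI))).
  assert (0 < Rmin eta (e / (2 * PI))) by (apply Rmin_pos; [lra|apply Rdiv_lt_0_compat; lra]).
  split; [lra|]. apply Rle_trans with (2 * PI * (e / (2 * PI))); [nra|right; field; lra].
Qed.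

Lemma exists_fejer_order c e : c < 1 -> 0 < e -> exists K, (1 <= K)%nat /\ 4 / (INR K * (1 - c)) <= e.
Proof.
  intros Hc He. destruct (archimed_cor1 (e * (1 - c) / 4)) as [K [HK1 HK2]]; [apply Rdiv_lt_0_compat; nra|].
  exists K. split; [lia|]. assert (HKp : 0 < INR K) by (apply lt_0_INR; lia).
  replace (4 / (INR K * (1 - c))) with (4 * / INR K / (1 - c)) by (field; lra).
  apply Rle_trans with (4 * (e * (1 - c) / 4) / (1 - c)); [|right; field; lra].
  unfold Rdiv. apply Rmult_le_compat_r; [left; apply Rinv_0_lt_compat; lra | lra].
Qed.

Lemma pow_01 x j : 0 <= x <= 1 -> 0 <= x ^ j <= 1.
Proof. intros Hx. induction j; simpl; nra. Qed.

Lemma pow_lipschitz01 k x y : 0 <= x <= 1 -> 0 <= y <= 1 -> Rabs (x ^ k - y ^ k) <= INR k * Rabs (x - y).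
Proof.
  intros Hx Hy. induction k as [|k IH]; [simpl; rewrite Rminus_diag, Rabs_R0; lra|].
  rewrite S_INR. simpl. replace (x * x ^ k - y * y ^ k) with (x * (x ^ k - y ^ k) + y ^ k * (x - y)) by ring.
  eapply Rle_trans; [apply Rabs_triang|].
  rewrite !Rabs_mult, (Rabs_pos_eq x), (Rabs_pos_eq (y ^ k)) by (try lra; apply pow_01; lra).
  pose proof (pow_01 y k Hy). pose proof (Rabs_pos (x ^ k - y ^ k)). pose proof (Rabs_pos (x - y)). nra.
Qed.

Lemma lipschitz01_power_cos k t a : lipschitz01 (fun x => x ^ k * cos (t * x + a)) (INR k + Rabs t).
Proof.
  intros x y Hx Hy.
  replace (x ^ k * cos (t * x + a) - y ^ k * cos (t * y + a)) with
    ((x ^ k - y ^ k) * cos (t * x + a) + y ^ k * (cos (t * x + a) - cos (t * y + a))) by ring.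
  eapply Rle_trans; [apply Rabs_triang|]. rewrite !Rabs_mult.
  pose proof (pow_lipschitz01 k x y Hx Hy). pose proof (pow_01 y k Hy).
  pose proof (lipschitz01_cos_affine t a x y Hx Hy). simpl in H1.
  pose proof (Rabs_cos_le_1 (t * x + a)). rewrite (Rabs_pos_eq (y ^ k)) by lra.
  pose proof (Rabs_pos (cos (t * x + a))). pose proof (Rabs_pos (x ^ k - y ^ k)). pose proof (Rabs_pos (x - y)).
  pose proof (Rabs_pos (cos (t * x + a) - cos (t * y + a))). nra.
Qed.

Lemma Rabs_fst_le_norm (z : C) : Rabs (fst z) <= @norm _ C_R_NormedModule z.
Proof.
  destruct z as [a b]. change (@norm _ C_R_NormedModule (a, b)) with (sqrt (Rabs a ^ 2 + Rabs b ^ 2)).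
  simpl fst. rewrite <- (sqrt_pow2 (Rabs a)) at 1 by apply Rabs_pos. apply sqrt_le_1_alt.
  pose proof (pow2_ge_0 (Rabs b)). lra.
Qed.

Lemma Rabs_snd_le_norm (z : C) : Rabs (snd z) <= @norm _ C_R_NormedModule z.
Proof.
  destruct z as [a b]. change (@norm _ C_R_NormedModule (a, b)) with (sqrt (Rabs a ^ 2 + Rabs b ^ 2)).
  simpl snd. rewrite <- (sqrt_pow2 (Rabs b)) at 1 by apply Rabs_pos. apply sqrt_le_1_alt.
  pose proof (pow2_ge_0 (Rabs a)). lra.
Qed.

Lemma fst_sum_n (u : nat -> C) n : fst (@sum_n C_R_NormedModule u n) = sum_n (fun i => fst (u i)) n.
Proof. induction n; [rewrite !sum_O; reflexivity|]. rewrite !sum_Sn. simpl. rewrite <- IHn. reflexivity. Qed.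

Lemma snd_sum_n (u : nat -> C) n : snd (@sum_n C_R_NormedModule u n) = sum_n (fun i => snd (u i)) n.
Proof. induction n; [rewrite !sum_O; reflexivity|]. rewrite !sum_Sn. simpl. rewrite <- IHn. reflexivity. Qed.

Lemma Cmod_le_Rabs_fst_snd (z : C) : Cmod z <= Rabs (fst z) + Rabs (snd z).
Proof.
  destruct z as [a b]. unfold Cmod. simpl fst; simpl snd.
  pose proof (Rabs_pos a); pose proof (Rabs_pos b).
  rewrite <- (sqrt_pow2 (Rabs a + Rabs b)) by lra. apply sqrt_le_1_alt.
  rewrite <- (pow2_abs a), <- (pow2_abs b). nra.
Qed.

Lemma is_RS_integral_fst f g I : is_RS_integral (V := C_R_NormedModule) f g 0 1 I ->
  is_RS_integral (V := R_NormedModule) (fun x => fst (f x)) g 0 1 (fst I).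
Proof.
  intros H eps. destruct (H eps) as [d Hd]. exists d. intros n p xi P0 P1 P2.
  eapply Rle_lt_trans; [|apply (Hd n p xi P0 P1 P2)].
  eapply Rle_trans; [|apply Rabs_fst_le_norm]. right.
  change (Rabs (sum_n (fun i => (g (p (S i)) - g (p i)) * fst (f (xi i))) (pred n) - fst I) =
    Rabs (fst (sum_n (fun i => scal (g (p (S i)) - g (p i)) (f (xi i))) (pred n)) - fst I)).
  rewrite fst_sum_n. reflexivity.
Qed.

Lemma is_RS_integral_snd f g I : is_RS_integral (V := C_R_NormedModule) f g 0 1 I ->
  is_RS_integral (V := R_NormedModule) (fun x => snd (f x)) g 0 1 (snd I).
Proof.
  intros H eps. destruct (H eps) as [d Hd]. exists d. intros n p xi P0 P1 P2.
  eapply Rle_lt_trans; [|apply (Hd n p xi P0 P1 P2)].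
  eapply Rle_trans; [|apply Rabs_snd_le_norm]. right.
  change (Rabs (sum_n (fun i => (g (p (S i)) - g (p i)) * snd (f (xi i))) (pred n) - snd I) =
    Rabs (snd (sum_n (fun i => scal (g (p (S i)) - g (p i)) (f (xi i))) (pred n)) - snd I)).
  rewrite snd_sum_n. reflexivity.
Qed.

Lemma power_cis_eq k t x : Cmult (Cpow (Cmult Ci (RtoC x)) k) (cis (t * x)) =
  (x ^ k * cos (t * x + INR k * (PI / 2)), x ^ k * cos (t * x + (INR k * (PI / 2) - PI / 2))).
Proof.
  assert (Hpow : Cpow (Cmult Ci (RtoC x)) k = (x ^ k * cos (INR k * (PI / 2)), x ^ k * sin (INR k * (PI / 2)))).
  { induction k as [|k IH].
    - simpl. rewrite Rmult_0_l, cos_0, sin_0. apply injective_projections; simpl; ring.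
    - simpl Cpow. rewrite IH, S_INR.
      replace ((INR k + 1) * (PI / 2)) with (INR k * (PI / 2) + PI / 2) by ring.
      rewrite cos_plus, sin_plus, cos_PI2, sin_PI2. apply injective_projections; simpl; ring. }
  rewrite Hpow. unfold cis.
  replace (t * x + (INR k * (PI / 2) - PI / 2)) with ((t * x + INR k * (PI / 2)) - PI / 2) by ring.
  rewrite cos_minus, cos_PI2, sin_PI2, !cos_plus, sin_plus.
  apply injective_projections; simpl; ring.
Qed.

(** * Salem's hypothesis and the oscillatory sums *)

Lemma freq_ge0 m : 0 <= 2 * PI * INR m.
Proof. pose proof PI_RGT_0. pose proof (pos_INR m). nra. Qed.

Lemma lipschitz01_cos_freq m : lipschitz01 (fun x => cos (2 * PI * INR m * x)) (2 * PI * INR m).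
Proof.
  intros x y Hx Hy. pose proof (lipschitz01_cos_affine (2 * PI * INR m) 0 x y Hx Hy) as H.
  cbv beta in H. rewrite !Rplus_0_r, (Rabs_pos_eq (2 * PI * INR m)) in H by apply freq_ge0. exact H.
Qed.

Lemma lipschitz01_sin_freq m : lipschitz01 (fun x => sin (2 * PI * INR m * x)) (2 * PI * INR m).
Proof.
  intros x y Hx Hy. pose proof (lipschitz01_sin_affine (2 * PI * INR m) 0 x y Hx Hy) as H.
  cbv beta in H. rewrite !Rplus_0_r, (Rabs_pos_eq (2 * PI * INR m)) in H by apply freq_ge0. exact H.
Qed.

Lemma RS_cos_coefficients_exist g : nondecr01 g -> exists d : nat -> R,
  forall m, is_RS_integral (V := R_NormedModule) (fun x => cos (2 * PI * INR m * x)) g 0 1 (d m).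
Proof.
  intros Hg. apply (choice (fun m I => is_RS_integral (V := R_NormedModule) (fun x => cos (2 * PI * INR m * x)) g 0 1 I)).
  intros m. apply (RS_integral_exists g _ (2 * PI * INR m) Hg (lipschitz01_cos_freq m) (freq_ge0 m)).
Qed.

Section Salem.

Variable g : R -> R.
Hypotheses (g_nondecr : nondecr01 g) (g_0 : g 0 = 0) (g_1 : g 1 = 1)
  (g_sym : forall x, 0 <= x <= 1 -> g (1 - x) = 1 - g x)
  (g_small_near_0 : forall e, 0 < e -> exists eta, 0 < eta <= 1 /\ g eta <= e).
Variable d : nat -> R.
Hypotheses (d_RS : forall m, is_RS_integral (V := R_NormedModule) (fun x => cos (2 * PI * INR m * x)) g 0 1 (d m))
  (d_lim : is_lim_seq d 0).

Lemma usum_cos_freq_error m N : (1 <= N)%nat ->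
  Rabs (usum g N (fun x => cos (2 * PI * INR m * x)) - d m) <= 2 * PI * INR m / INR N.
Proof.
  intros HN.
  eapply Rle_trans; [apply (usum_RS_integral_error g _ _ g_nondecr (lipschitz01_cos_freq m) (freq_ge0 m)); auto|].
  rewrite g_0, g_1. right. unfold Rdiv. ring.
Qed.

(* The symmetry [g (1 - x) = 1 - g x] turns the left sum of [sin (2 pi m x)] into minus its right
   sum, and the two differ by at most [4 pi m / N]. *)
Lemma usum_sin_freq_small m N : (1 <= N)%nat ->
  Rabs (usum g N (fun x => sin (2 * PI * INR m * x))) <= 2 * PI * INR m / INR N.
Proof.
  intros HN. set (f := fun x => sin (2 * PI * INR m * x)).
  set (right_sum := RS_sum g f N (grid N) (fun i => grid N (S i))).
  assert (E : usum g N f = - right_sum).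
  { unfold usum, right_sum, RS_sum. rewrite rsum_rev, <- rsum_opp. apply rsum_ext. intros i Hi.
    assert (HNz : INR N <> 0) by (apply not_0_INR; lia).
    assert (Hrev : INR (N - 1 - i) = INR N - 1 - INR i)
      by (replace (N - 1 - i)%nat with (N - S i)%nat by lia; rewrite minus_INR, S_INR by lia; ring).
    assert (E1 : grid N (S (N - 1 - i)) = 1 - grid N i) by (unfold grid; rewrite S_INR, Hrev; field; auto).
    assert (E2 : grid N (N - 1 - i) = 1 - grid N (S i)) by (unfold grid; rewrite S_INR, Hrev; field; auto).
    rewrite E1, E2. pose proof (grid_range N i HN ltac:(lia)). pose proof (grid_range N (S i) HN ltac:(lia)).
    rewrite !g_sym by auto. unfold f.
    replace (2 * PI * INR m * (1 - grid N (S i))) with (- (2 * PI * INR m * grid N (S i)) + 2 * INR m * PI) by ring.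
    rewrite sin_period, sin_neg. ring. }
  pose proof (RS_sum_close g f _ _ _ _ _ _ _ _ _ g_nondecr (lipschitz01_sin_freq m) (freq_ge0 m) (grid_partition N HN) (grid_partition_right N HN)) as H.
  fold (usum g N f) right_sum in H. rewrite g_0, g_1, E in *.
  replace (- right_sum - right_sum) with (-2 * right_sum) in H by ring.
  rewrite Rabs_mult in H. rewrite Rabs_Ropp. replace (Rabs (-2)) with 2 in H by (rewrite Rabs_left; lra).
  replace (2 * PI * INR m * (/ INR N + / INR N) * (1 - 0)) with (2 * (2 * PI * INR m / INR N)) in H
    by (unfold Rdiv; ring).
  lra.
Qed.

Lemma usum_high_freq_small E : 0 < E -> exists M0, forall m N gm, (M0 <= m)%nat -> (1 <= N)%nat ->
  2 * PI * INR m / INR N <= E / 4 -> Rabs (usum g N (fun x => cos (2 * PI * INR m * x + gm))) <= E.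
Proof.
  intros HE. apply is_lim_seq_spec in d_lim. destruct (d_lim (mkposreal (E / 2) ltac:(lra))) as [M0 HM0].
  exists M0. intros m N gm Hm HN Hmesh. eapply Rle_trans; [apply usum_cos_shift_le; auto|].
  pose proof (usum_cos_freq_error m N HN). pose proof (usum_sin_freq_small m N HN).
  specialize (HM0 m Hm). simpl in HM0. rewrite Rminus_0_r in HM0.
  assert (Rabs (usum g N (fun x => cos (2 * PI * INR m * x))) <= E / 2 + E / 4).
  { replace (usum g N (fun x => cos (2 * PI * INR m * x))) with
      ((usum g N (fun x => cos (2 * PI * INR m * x)) - d m) + d m) by ring.
    eapply Rle_trans; [apply Rabs_triang|]. lra. }
  lra.
Qed.

Lemma g_small_interval e : 0 < e -> exists eta, 0 < eta <= 1/4 /\ g (2 * eta) <= e.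
Proof.
  intros He. destruct (g_small_near_0 e He) as [eta0 [Heta0 Hg0]].
  exists (Rmin (eta0 / 2) (1/4)). pose proof (Rmin_l (eta0 / 2) (1/4)). pose proof (Rmin_r (eta0 / 2) (1/4)).
  assert (0 < Rmin (eta0 / 2) (1/4)) by (apply Rmin_pos; lra).
  split; [lra|]. pose proof (g_nondecr (2 * Rmin (eta0 / 2) (1/4)) eta0). lra.
Qed.

Lemma usum_cos_small eps : 0 < eps -> exists T, 0 <= T /\ forall t al, T < t ->
  exists N0, forall N, (N0 <= N)%nat -> Rabs (usum g N (fun x => cos (t * x + al))) <= eps.
Proof.
  intros Heps. pose proof PI_RGT_0.
  destruct (g_small_interval (eps / 64)) as [eta [Heta Hg2eta]]; [lra|].
  assert (Hgeta : g eta <= eps / 64) by (pose proof (g_nondecr eta (2 * eta)); lra).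
  destruct (exists_small_radius eta (eps / 32)) as [r Hr]; [lra|lra|].
  destruct (exists_fejer_order (cos (2 * PI * r)) (eps / 32)) as [K [HK HKc]]; [apply cos_lt_1; nra|lra|].
  assert (HKp : 0 < INR K) by (apply lt_0_INR; lia).
  set (E := eps / (4 * INR K)). assert (HE : 0 < E) by (unfold E; apply Rdiv_lt_0_compat; lra).
  destruct (usum_high_freq_small E HE) as [M0 HM0].
  exists (2 * PI * (INR (M0 + K) + 1)). split; [pose proof (pos_INR (M0 + K)); nra|]. intros t al Ht.
  destruct (nat_frequency_split t (M0 + K) Ht) as [n [s [-> [Hs Hn]]]].
  assert (HnK : 0 < INR n + INR K) by (pose proof (pos_INR n); lra).
  destruct (inv_INR_small eta) as [N1 [HN1 HN1']]; [lra|].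
  destruct (inv_INR_small (E / (8 * PI * (INR n + INR K)))) as [N2 [HN2 HN2']]; [apply Rdiv_lt_0_compat; nra|].
  exists (Nat.max N1 N2). intros N HN. assert (HN0 : (1 <= N)%nat) by lia.
  specialize (HN1' N ltac:(lia)). specialize (HN2' N ltac:(lia)).
  assert (HNp : 0 < / INR N) by (apply Rinv_0_lt_compat, lt_0_INR; lia).
  set (psi := fun y => s * y + al).
  rewrite (usum_ext g N HN0 _ (fun x => fejer_modulated n K psi x + (cos (2 * PI * INR n * x + psi x) - fejer_modulated n K psi x)))
    by (intros; unfold psi; replace ((2 * PI * INR n + s) * x + al) with (2 * PI * INR n * x + (s * x + al)) by ring; ring).
  rewrite usum_plus. eapply Rle_trans; [apply Rabs_triang|].
  assert (Hmain : Rabs (usum g N (fejer_modulated n K psi)) <= eps / 4).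
  { eapply Rle_trans; [apply usum_fejer_modulated_le; [auto|lia|]|].
    - intros m gm Hm. apply HM0; [lia|auto|].
      assert (INR m <= INR n + INR K) by (rewrite <- plus_INR; apply le_INR; lia).
      unfold Rdiv. apply Rle_trans with (2 * PI * (INR n + INR K) * (E / (8 * PI * (INR n + INR K)))).
      + apply Rmult_le_compat; [pose proof (pos_INR m); nra|lra|nra|lra].
      + right. field. lra.
    - right. unfold E. field. lra. }
  assert (Hrest : Rabs (usum g N (fun x => cos (2 * PI * INR n * x + psi x) - fejer_modulated n K psi x)) <= eps / 4).
  { eapply Rle_trans.
    - apply (usum_endpoint_bound g N _ (eps / 8) 4 eta g_nondecr HN0); try lra.
      + intros x _. apply fejer_modulated_error_le_4; auto.
      + intros x Hx. eapply Rle_trans; [apply (fejer_modulated_error_mid n K s al r eta x); auto; lra|]. lra.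
    - rewrite g_0, g_1, <- g_sym by lra. replace (1 - (1 - eta)) with eta by ring.
      assert (g (eta + / INR N) <= g (2 * eta)) by (apply g_nondecr; lra). lra. }
  lra.
Qed.

Definition oscillatory_decay (j : nat) := forall eps, 0 < eps -> exists T, forall t al, T < Rabs t ->
  exists N0, forall N, (N0 <= N)%nat -> Rabs (usum g N (fun x => x ^ j * cos (t * x + al))) <= eps.

Lemma oscillatory_decay_0 : oscillatory_decay 0.
Proof.
  intros eps Heps. destruct (usum_cos_small eps Heps) as [T [HT HTt]]. exists T. intros t al Ht.
  destruct (Rle_dec 0 t).
  - rewrite Rabs_pos_eq in Ht by auto. destruct (HTt t al Ht) as [N0 HN0]. exists (Nat.max N0 1). intros N HN.
    rewrite (usum_ext g N ltac:(lia) _ (fun x => cos (t * x + al))) by (intros; simpl; ring). apply HN0; lia.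
  - rewrite Rabs_left in Ht by lra. destruct (HTt (- t) (- al) Ht) as [N0 HN0]. exists (Nat.max N0 1). intros N HN.
    rewrite (usum_ext g N ltac:(lia) _ (fun x => cos (- t * x + - al))); [apply HN0; lia|].
    intros. simpl. rewrite Rmult_1_l, cos_sym. f_equal. ring.
Qed.

(* With [b = al + pi/2], [x cos (t x + al) = x sin (t x + b)] is minus the [t]-derivative of
   [cos (t x + b)]: a difference quotient with step [h] reduces the power [j + 1] to [j] at the cost
   of an [O(h^2)] Taylor error. *)
Lemma oscillatory_decay_S j : oscillatory_decay j -> oscillatory_decay (S j).
Proof.
  intros IH eps Heps.
  set (h := Rmin 1 (eps / 4)).
  assert (Hh : 0 < h <= 1 /\ h <= eps / 4)
    by (unfold h; split; [split; [apply Rmin_pos; lra| apply Rmin_l]| apply Rmin_r]).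
  destruct (IH (h * eps / 4) ltac:(nra)) as [T HT]. exists (T + 1). intros t al Ht.
  set (b := al + PI / 2).
  destruct (HT (t + h) b) as [N1 HN1]; [unfold Rabs in *; repeat destruct Rcase_abs; lra|].
  destruct (HT t b) as [N2 HN2]; [lra|].
  exists (Nat.max (Nat.max N1 N2) 1). intros N HN. assert (HN0 : (1 <= N)%nat) by lia.
  set (taylor := fun x => cos (t * x + b) * (cos (h * x) - 1) - sin (t * x + b) * (sin (h * x) - h * x)).
  assert (Hdiff : h * usum g N (fun x => x ^ S j * cos (t * x + al)) =
    usum g N (fun x => x ^ j * cos (t * x + b)) - usum g N (fun x => x ^ j * cos ((t + h) * x + b))
    + usum g N (fun x => x ^ j * taylor x)).
  { rewrite <- usum_minus, <- usum_plus, <- usum_scal. apply usum_ext; auto. intros x _.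
    unfold taylor. replace ((t + h) * x + b) with ((t * x + b) + h * x) by ring.
    rewrite (cos_plus (t * x + b) (h * x)).
    replace (cos (t * x + al)) with (sin (t * x + b)).
    - simpl. ring.
    - unfold b. replace (t * x + (al + PI / 2)) with ((t * x + al) + PI / 2) by ring.
      rewrite sin_plus, cos_PI2, sin_PI2. ring. }
  assert (Htaylor : Rabs (usum g N (fun x => x ^ j * taylor x)) <= 2 * (h * h)).
  { eapply Rle_trans; [apply (usum_abs_le g N g_nondecr HN0 _ (fun _ => 2 * (h * h)))|].
    - intros x Hx. pose proof (pow_01 x j Hx). rewrite Rabs_mult, (Rabs_pos_eq (x ^ j)) by lra.
      assert (Hhx : 0 <= h * x <= 1) by nra. assert (h * x * (h * x) <= h * h) by (apply Rmult_le_compat; nra).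
      assert (Rabs (taylor x) <= 2 * (h * h)).
      { unfold taylor. eapply Rle_trans; [apply Rabs_rotation_le|].
        pose proof (cos_sub_1_le_sq (h * x) Hhx). pose proof (sin_sub_id_le_sq (h * x) Hhx). lra. }
      pose proof (Rabs_pos (taylor x)). nra.
    - rewrite usum_const, g_0, g_1 by auto. lra. }
  pose proof (HN1 N ltac:(lia)). pose proof (HN2 N ltac:(lia)).
  assert (Habs : h * Rabs (usum g N (fun x => x ^ S j * cos (t * x + al))) <= h * eps / 4 + h * eps / 4 + 2 * (h * h)).
  { rewrite <- (Rabs_pos_eq h) at 1 by lra. rewrite <- Rabs_mult, Hdiff.
    eapply Rle_trans; [apply Rabs_triang|].
    unfold Rminus. eapply Rle_trans; [apply Rplus_le_compat_r, Rabs_triang|]. rewrite Rabs_Ropp. lra. }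
  apply (Rmult_le_reg_l h); [lra|]. nra.
Qed.

Lemma RS_integral_power_cos_small k : forall eps, 0 < eps -> exists T, forall t a I, T < Rabs t ->
  is_RS_integral (V := R_NormedModule) (fun x => x ^ k * cos (t * x + a)) g 0 1 I -> Rabs I <= eps.
Proof.
  assert (Hdecay : forall j, oscillatory_decay j)
    by (induction j; [apply oscillatory_decay_0 | apply oscillatory_decay_S; auto]).
  intros eps Heps. destruct (Hdecay k (eps / 2) ltac:(lra)) as [T HT].
  exists T. intros t a I Ht HI. destruct (HT t a Ht) as [N1 HN1].
  set (L := INR k + Rabs t). assert (HL : 0 <= L) by (unfold L; pose proof (pos_INR k); pose proof (Rabs_pos t); lra).
  pose proof (lipschitz01_power_cos k t a) as Hlip.
  destruct (small_mesh g L g_nondecr HL (eps / 2)) as [N2 [HN2 HN2']]; [lra|].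
  set (N := Nat.max N1 N2).
  pose proof (usum_RS_integral_error g _ L g_nondecr Hlip HL I N ltac:(lia) HI).
  specialize (HN1 N ltac:(lia)). specialize (HN2' N ltac:(lia)).
  replace I with (usum g N (fun x => x ^ k * cos (t * x + a)) - (usum g N (fun x => x ^ k * cos (t * x + a)) - I)) by ring.
  eapply Rle_trans; [apply Rabs_triang|]. rewrite Rabs_Ropp. lra.
Qed.

Lemma RS_integral_power_cis_small k F :
  (forall t, is_RS_integral (V := C_R_NormedModule)
     (fun x => Cmult (Cpow (Cmult Ci (RtoC x)) k) (cis (t * x))) g 0 1 (F t)) ->
  forall eps : posreal, exists T, forall t, T < Rabs t -> Cmod (F t) < eps.
Proof.
  intros HF eps. destruct (RS_integral_power_cos_small k (eps / 4)) as [T HT]; [pose proof (cond_pos eps); lra|].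
  exists T. intros t Ht.
  assert (H1 : is_RS_integral (V := R_NormedModule)
    (fun x => x ^ k * cos (t * x + INR k * (PI / 2))) g 0 1 (fst (F t))).
  { replace (fun x => x ^ k * cos (t * x + INR k * (PI / 2))) with
      (fun x => fst (Cmult (Cpow (Cmult Ci (RtoC x)) k) (cis (t * x)))).
    - apply is_RS_integral_fst, HF.
    - apply functional_extensionality. intros x. rewrite power_cis_eq. reflexivity. }
  assert (H2 : is_RS_integral (V := R_NormedModule)
    (fun x => x ^ k * cos (t * x + (INR k * (PI / 2) - PI / 2))) g 0 1 (snd (F t))).
  { replace (fun x => x ^ k * cos (t * x + (INR k * (PI / 2) - PI / 2))) with
      (fun x => snd (Cmult (Cpow (Cmult Ci (RtoC x)) k) (cis (t * x)))).
    - apply is_RS_integral_snd, HF.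
    - apply functional_extensionality. intros x. rewrite power_cis_eq. reflexivity. }
  pose proof (HT t _ _ Ht H1). pose proof (HT t _ _ Ht H2).
  eapply Rle_lt_trans; [apply Cmod_le_Rabs_fst_snd|]. pose proof (cond_pos eps). lra.
Qed.

End Salem.

(** * The Minkowski question mark function *)

Lemma cf_rem_S x i : cf_rem x (S i) = cf_rem (gauss_map x) i.
Proof. induction i; [reflexivity|]. simpl in *. rewrite IHi. reflexivity. Qed.

Lemma cf_digit_S x i : cf_digit x (S i) = cf_digit (gauss_map x) i.
Proof. unfold cf_digit. rewrite cf_rem_S. reflexivity. Qed.

Lemma cf_digit_sum_S x i : cf_digit_sum x (S i) = (cf_digit x 0 + cf_digit_sum (gauss_map x) i)%nat.
Proof.
  induction i as [|i IH]; [simpl; rewrite cf_digit_S; reflexivity|].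
  change (cf_digit_sum x (S (S i))) with (cf_digit_sum x (S i) + cf_digit x (S (S i)))%nat.
  rewrite IH, cf_digit_S. simpl. lia.
Qed.

Lemma minkowski_term_S x i :
  minkowski_term x (S i) = - (/ 2) ^ (cf_digit x 0) * minkowski_term (gauss_map x) i.
Proof.
  unfold minkowski_term. rewrite cf_rem_S. destruct Req_EM_T; [ring|].
  rewrite cf_digit_sum_S, pow_add. simpl. ring.
Qed.

Lemma minkowski_term_0 x : x <> 0 -> minkowski_term x 0 = 2 * (/ 2) ^ (cf_digit x 0).
Proof. intros H. unfold minkowski_term. simpl. destruct Req_EM_T; [contradiction|ring]. Qed.

Lemma Int_part_ge1 y : 1 <= y -> (1 <= Int_part y)%Z.
Proof. intros H. destruct (base_Int_part y). assert (0 < Int_part y)%Z by (apply lt_IZR; lra). lia. Qed.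

Lemma Int_part_le r1 r2 : r1 <= r2 -> (Int_part r1 <= Int_part r2)%Z.
Proof.
  intros H. destruct (base_Int_part r1), (base_Int_part r2).
  assert (IZR (Int_part r1) < IZR (Int_part r2 + 1)) by (rewrite plus_IZR; simpl; lra).
  apply lt_IZR in H4. lia.
Qed.

Lemma Int_part_sub_1 r : Int_part (r - 1) = (Int_part r - 1)%Z.
Proof. symmetry. apply Int_part_spec. rewrite minus_IZR. destruct (base_Int_part r). simpl. lra. Qed.

Lemma gauss_map_eq x : x <> 0 -> gauss_map x = / x - IZR (Int_part (/ x)).
Proof. intros H. unfold gauss_map. destruct Req_EM_T; [contradiction|reflexivity]. Qed.

Lemma cf_digit_0_eq x : x <> 0 -> cf_digit x 0 = Z.to_nat (Int_part (/ x)).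
Proof. intros H. unfold cf_digit. simpl. destruct Req_EM_T; [contradiction|reflexivity]. Qed.

Lemma gauss_map_range x : 0 < x <= 1 -> 0 <= gauss_map x < 1.
Proof. intros Hx. rewrite gauss_map_eq by lra. destruct (base_Int_part (/ x)). lra. Qed.

Lemma cf_digit_0_INR x : 0 < x <= 1 -> INR (cf_digit x 0) = IZR (Int_part (/ x)) /\ (1 <= cf_digit x 0)%nat.
Proof.
  intros Hx. rewrite cf_digit_0_eq by lra.
  assert (1 <= / x) by (rewrite <- Rinv_1; apply Rinv_le_contravar; lra).
  pose proof (Int_part_ge1 _ H). split; [rewrite INR_IZR_INZ, Z2Nat.id by lia; auto | lia].
Qed.

Lemma cf_rem_range x i : 0 <= x <= 1 -> 0 <= cf_rem x i <= 1.
Proof.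
  intros Hx. induction i as [|i IH]; [auto|]. simpl.
  destruct (Req_dec (cf_rem x i) 0) as [E|E].
  - rewrite E. unfold gauss_map. destruct Req_EM_T; lra.
  - pose proof (gauss_map_range (cf_rem x i) ltac:(lra)). lra.
Qed.

Lemma cf_rem_0_S x i : cf_rem x i = 0 -> cf_rem x (S i) = 0.
Proof. intros H. simpl. rewrite H. unfold gauss_map. destruct Req_EM_T; lra. Qed.

Lemma cf_digit_ge1 x i : 0 <= x <= 1 -> cf_rem x i <> 0 -> (1 <= cf_digit x i)%nat.
Proof.
  intros Hx H. unfold cf_digit. destruct Req_EM_T; [contradiction|].
  pose proof (cf_rem_range x i Hx).
  assert (1 <= / cf_rem x i) by (rewrite <- Rinv_1; apply Rinv_le_contravar; lra).
  pose proof (Int_part_ge1 _ H1). lia.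
Qed.

Lemma cf_digit_sum_ge x i : 0 <= x <= 1 -> cf_rem x i <> 0 -> (S i <= cf_digit_sum x i)%nat.
Proof.
  intros Hx. induction i as [|i IH]; intros H; [apply cf_digit_ge1; auto|].
  assert (cf_rem x i <> 0) by (intro E; apply H, cf_rem_0_S; auto).
  pose proof (IH H0). pose proof (cf_digit_ge1 x (S i) Hx H). simpl. lia.
Qed.

Lemma half_pow_le n m : (n <= m)%nat -> (/ 2) ^ m <= (/ 2) ^ n.
Proof.
  intros H. replace m with (n + (m - n))%nat by lia. rewrite pow_add.
  assert (0 < (/ 2) ^ n) by (apply pow_lt; lra). pose proof (pow_01 (/ 2) (m - n) ltac:(lra)). nra.
Qed.

Lemma minkowski_term_bound x i : 0 <= x <= 1 -> Rabs (minkowski_term x i) <= (/ 2) ^ i.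
Proof.
  intros Hx. unfold minkowski_term. destruct Req_EM_T as [|Hrem]; [rewrite Rabs_R0; apply pow_le; lra|].
  pose proof (half_pow_le _ _ (cf_digit_sum_ge x i Hx Hrem)).
  rewrite !Rabs_mult, pow_1_abs, (Rabs_pos_eq 2), (Rabs_pos_eq ((/ 2) ^ _)) by (try apply pow_le; lra).
  simpl in H. lra.
Qed.

Lemma is_series_half_pow : is_series (fun n => (/ 2) ^ n) 2.
Proof.
  pose proof (is_series_geom (/ 2) ltac:(rewrite Rabs_pos_eq; lra)) as H.
  replace (/ (1 - / 2)) with 2 in H by field. exact H.
Qed.

Lemma ex_series_minkowski_term x : 0 <= x <= 1 -> ex_series (minkowski_term x).
Proof.
  intros Hx. apply (@ex_series_le R_AbsRing R_CompleteNormedModule _ (fun n => (/ 2) ^ n)).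
  - intros n. apply minkowski_term_bound; auto.
  - exists 2. apply is_series_half_pow.
Qed.

Lemma minkowski_abs_le_2 x : 0 <= x <= 1 -> Rabs (minkowski x) <= 2.
Proof.
  intros Hx. unfold minkowski. eapply Rle_trans; [apply Series_Rabs|].
  - apply (@ex_series_le R_AbsRing R_CompleteNormedModule _ (fun n => (/ 2) ^ n)).
    + intros n. rewrite Rabs_Rabsolu. apply minkowski_term_bound; auto.
    + exists 2. apply is_series_half_pow.
  - rewrite <- (is_series_unique _ _ is_series_half_pow). apply Series_le.
    + intros n. split; [apply Rabs_pos | apply minkowski_term_bound; auto].
    + exists 2. apply is_series_half_pow.
Qed.

Lemma minkowski_gauss x : 0 < x <= 1 ->
  minkowski x = (/ 2) ^ (cf_digit x 0) * (2 - minkowski (gauss_map x)).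
Proof.
  intros Hx. unfold minkowski. rewrite Series_incr_1 by (apply ex_series_minkowski_term; lra).
  rewrite minkowski_term_0 by lra.
  rewrite (Series_ext _ (fun k => (- (/ 2) ^ (cf_digit x 0)) * minkowski_term (gauss_map x) k))
    by (intros; apply minkowski_term_S).
  rewrite Series_scal_l. ring.
Qed.

Lemma minkowski_0 : minkowski 0 = 0.
Proof.
  assert (E : forall i, cf_rem 0 i = 0) by (induction i; [reflexivity | apply cf_rem_0_S; auto]).
  unfold minkowski. rewrite (Series_ext _ (fun n => 0 * minkowski_term 0 n)), Series_scal_l; [ring|].
  intros n. unfold minkowski_term. destruct Req_EM_T; [ring | contradiction (E n)].
Qed.

Lemma minkowski_range x : 0 <= x <= 1 -> 0 <= minkowski x <= 1.
Proof.
  assert (Hgauss : forall y, 0 < y <= 1 -> exists p, 0 < p <= 1/2 /\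
    minkowski y = p * (2 - minkowski (gauss_map y)) /\ 0 <= gauss_map y <= 1).
  { intros y Hy. exists ((/ 2) ^ (cf_digit y 0)). destruct (cf_digit_0_INR y Hy) as [_ Hd].
    pose proof (half_pow_le 1 _ Hd). pose proof (pow_lt (/ 2) (cf_digit y 0) ltac:(lra)).
    pose proof (gauss_map_range y Hy). simpl in *. repeat split; try lra. apply minkowski_gauss; auto. }
  assert (H02 : forall y, 0 <= y <= 1 -> 0 <= minkowski y <= 2).
  { intros y Hy. destruct (Req_dec y 0) as [->|]; [rewrite minkowski_0; lra|].
    destruct (Hgauss y ltac:(lra)) as [p [Hp [-> HG]]].
    pose proof (minkowski_abs_le_2 _ HG) as Habs. apply Rabs_le_between in Habs. nra. }
  intros Hx. destruct (Req_dec x 0) as [->|]; [rewrite minkowski_0; lra|].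
  destruct (Hgauss x ltac:(lra)) as [p [Hp [-> HG]]]. pose proof (H02 _ HG). nra.
Qed.

Lemma minkowski_bounds x : 0 < x <= 1 ->
  (/ 2) ^ (cf_digit x 0) <= minkowski x <= 2 * (/ 2) ^ (cf_digit x 0).
Proof.
  intros Hx. rewrite minkowski_gauss by auto. pose proof (gauss_map_range x Hx).
  pose proof (minkowski_range (gauss_map x) ltac:(lra)).
  assert (0 < (/ 2) ^ (cf_digit x 0)) by (apply pow_lt; lra). split; nra.
Qed.

Lemma minkowski_1 : minkowski 1 = 1.
Proof.
  assert (E : Int_part 1 = 1%Z) by (pose proof (Int_part_INR 1) as E; simpl in E; exact E).
  rewrite minkowski_gauss, cf_digit_0_eq, gauss_map_eq, Rinv_1, E by lra. simpl Z.to_nat.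
  replace (1 - IZR 1) with 0 by (simpl; ring). rewrite minkowski_0. simpl. field.
Qed.

(* Equal first digits: compare the remainders, whose order is reversed; different first digits:
   the two values lie in disjoint dyadic ranges by [minkowski_bounds]. *)
Lemma minkowski_decrease_le N x y : 0 <= x -> x <= y -> y <= 1 -> minkowski x - minkowski y <= 2 * (/ 2) ^ N.
Proof.
  revert x y. induction N as [|N IH]; intros x y Hx Hxy Hy.
  - pose proof (minkowski_range x ltac:(lra)). pose proof (minkowski_range y ltac:(lra)). simpl. lra.
  - assert (Hp : 0 < (/ 2) ^ N) by (apply pow_lt; lra).
    destruct (Req_dec x 0) as [->|Hx0].
    { rewrite minkowski_0. pose proof (minkowski_range y ltac:(lra)). simpl. nra. }
    pose proof (minkowski_bounds x ltac:(lra)). pose proof (minkowski_bounds y ltac:(lra)).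
    destruct (cf_digit_0_INR x ltac:(lra)) as [Ax Ax1], (cf_digit_0_INR y ltac:(lra)) as [Ay Ay1].
    assert (Hinv : / y <= / x) by (apply Rinv_le_contravar; lra).
    pose proof (Int_part_le _ _ Hinv) as Hm.
    assert (Hab : (cf_digit y 0 <= cf_digit x 0)%nat) by (apply INR_le; rewrite Ax, Ay; apply IZR_le; auto).
    destruct (Nat.eq_dec (cf_digit x 0) (cf_digit y 0)) as [Eq|Ne].
    + assert (EZ : Int_part (/ x) = Int_part (/ y)) by (apply eq_IZR; rewrite <- Ax, <- Ay, Eq; reflexivity).
      rewrite (minkowski_gauss x), (minkowski_gauss y), Eq by lra.
      pose proof (gauss_map_range x ltac:(lra)). pose proof (gauss_map_range y ltac:(lra)).
      assert (gauss_map y <= gauss_map x) by (rewrite !gauss_map_eq, EZ by lra; lra).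
      specialize (IH (gauss_map y) (gauss_map x) ltac:(lra) ltac:(lra) ltac:(lra)).
      pose proof (half_pow_le 1 _ Ay1). assert (0 < (/ 2) ^ cf_digit y 0) by (apply pow_lt; lra).
      simpl in *. destruct (Rle_dec 0 (minkowski (gauss_map y) - minkowski (gauss_map x))); nra.
    + pose proof (half_pow_le (S (cf_digit y 0)) (cf_digit x 0) ltac:(lia)). simpl in *. nra.
Qed.

Lemma minkowski_nondecr : nondecr01 minkowski.
Proof.
  intros x y Hx Hxy Hy. destruct (Rle_dec (minkowski x) (minkowski y)) as [|Hlt]; auto. exfalso.
  set (d := minkowski x - minkowski y).
  destruct (pow_lt_1_zero (/ 2) ltac:(rewrite Rabs_pos_eq; lra) (d / 2) ltac:(unfold d; lra)) as [N HN].
  specialize (HN N (le_n N)). rewrite Rabs_pos_eq in HN by (apply pow_le; lra).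
  pose proof (minkowski_decrease_le N x y Hx Hxy Hy). fold d in H. lra.
Qed.

(* For [0 < x < 1/2]: [1 - x = [0; 1, a_1 - 1, a_2, ...]] when [x = [0; a_1, a_2, ...]]. *)
Lemma minkowski_sym_lt_half x : 0 < x < 1/2 -> minkowski (1 - x) = 1 - minkowski x.
Proof.
  intros Hx. set (y := 1 - x).
  assert (Hy1 : 1 < / y) by (unfold y; rewrite <- Rinv_1 at 1; apply Rinv_lt_contravar; lra).
  assert (Hy2 : / y < 2) by (unfold y; replace 2 with (/ / 2) by field; apply Rinv_lt_contravar; lra).
  assert (Iy : Int_part (/ y) = 1%Z) by (symmetry; apply Int_part_spec; simpl; lra).
  assert (Dy : cf_digit y 0 = 1%nat) by (rewrite cf_digit_0_eq by (unfold y; lra); rewrite Iy; reflexivity).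
  set (z := gauss_map y).
  assert (Ez : z = x / (1 - x)) by (unfold z; rewrite gauss_map_eq by (unfold y; lra); rewrite Iy; unfold y; simpl; field; lra).
  assert (Hz : 0 < z <= 1).
  { rewrite Ez. split; [apply Rdiv_lt_0_compat; lra|].
    apply (Rmult_le_reg_r (1 - x)); [lra|]. unfold Rdiv. rewrite Rmult_assoc, Rinv_l by lra. lra. }
  assert (Eiz : / z = / x - 1) by (rewrite Ez; field; lra).
  set (a := Int_part (/ x)).
  assert (Ha : (2 <= a)%Z).
  { assert (2 < / x) by (replace 2 with (/ / 2) by field; apply Rinv_lt_contravar; lra).
    destruct (base_Int_part (/ x)). fold a in H0, H1. assert (1 < a)%Z by (apply lt_IZR; simpl; lra). lia. }
  assert (Iz : Int_part (/ z) = (a - 1)%Z) by (rewrite Eiz, Int_part_sub_1; reflexivity).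
  assert (Dx : cf_digit x 0 = Z.to_nat a) by (apply cf_digit_0_eq; lra).
  assert (Dz : cf_digit z 0 = (Z.to_nat a - 1)%nat)
    by (rewrite cf_digit_0_eq by lra; rewrite Iz, Z2Nat.inj_sub by lia; reflexivity).
  assert (Gz : gauss_map z = gauss_map x) by (rewrite !gauss_map_eq, Iz, Eiz, minus_IZR by lra; fold a; simpl; ring).
  assert (Mz : minkowski z = 2 * minkowski x).
  { rewrite (minkowski_gauss z Hz), (minkowski_gauss x ltac:(lra)), Dz, Dx, Gz.
    replace (Z.to_nat a) with (S (Z.to_nat a - 1)) at 2 by lia. simpl. field. }
  rewrite (minkowski_gauss y) by (unfold y; lra). rewrite Dy. fold z. rewrite Mz. simpl. field.
Qed.

Lemma minkowski_half : minkowski (1/2) = 1/2.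
Proof.
  replace (/ (1/2)) with (INR 2) by (simpl; field).
  rewrite minkowski_gauss, cf_digit_0_eq, gauss_map_eq by lra.
  replace (/ (1/2)) with (INR 2) by (simpl; field). rewrite Int_part_INR. simpl Z.to_nat.
  rewrite <- INR_IZR_INZ, Rminus_diag, minkowski_0. simpl. field.
Qed.

Lemma minkowski_sym x : 0 <= x <= 1 -> minkowski (1 - x) = 1 - minkowski x.
Proof.
  intros Hx. destruct (Req_dec x 0) as [->|]; [rewrite Rminus_0_r, minkowski_1, minkowski_0; ring|].
  destruct (Req_dec x 1) as [->|]; [rewrite Rminus_diag, minkowski_1, minkowski_0; ring|].
  destruct (Rlt_dec x (1/2)); [apply minkowski_sym_lt_half; lra|].
  destruct (Req_dec x (1/2)) as [->|].
  - replace (1 - 1/2) with (1/2) by field. rewrite minkowski_half. field.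
  - pose proof (minkowski_sym_lt_half (1 - x) ltac:(lra)) as Hrefl.
    replace (1 - (1 - x)) with x in Hrefl by ring. lra.
Qed.

Lemma minkowski_small_near_0 e : 0 < e -> exists eta, 0 < eta <= 1 /\ minkowski eta <= e.
Proof.
  intros He. destruct (pow_lt_1_zero (/ 2) ltac:(rewrite Rabs_pos_eq; lra) (e / 2) ltac:(lra)) as [N HN].
  specialize (HN N (le_n N)). rewrite Rabs_pos_eq in HN by (apply pow_le; lra).
  assert (HNp : 2 <= INR (N + 2)) by (rewrite plus_INR; simpl; pose proof (pos_INR N); lra).
  exists (/ INR (N + 2)).
  assert (He0 : 0 < / INR (N + 2) <= 1).
  { split; [apply Rinv_0_lt_compat; lra|]. rewrite <- Rinv_1. apply Rinv_le_contravar; lra. }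
  split; auto. destruct (minkowski_bounds _ He0) as [_ B].
  rewrite cf_digit_0_eq, Rinv_inv, Int_part_INR, Nat2Z.id in B by lra.
  pose proof (half_pow_le N (N + 2) ltac:(lia)).
  assert ((/ 2) ^ (N + 2) = / 4 * (/ 2) ^ N) by (rewrite pow_add; simpl; field). lra.
Qed.

Theorem theorem3 :
  forall k : nat,
  (forall d : nat -> R,
     (forall n : nat,
        is_RS_integral (V := R_NormedModule)
          (fun x => cos (2 * PI * INR n * x)) minkowski 0 1 (d n)) ->
     is_lim_seq d 0) ->
  forall F : R -> C,
    (forall t : R,
       is_RS_integral (V := C_R_NormedModule)
         (fun x => Cmult (Cpow (Cmult Ci (RtoC x)) k) (cis (t * x)))
         minkowski 0 1 (F t)) ->
    forall eps : posreal, exists T : R,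
      forall t : R, T < Rabs t -> Cmod (F t) < eps.
Proof.
  intros k Hsalem F HF.
  destruct (RS_cos_coefficients_exist minkowski minkowski_nondecr) as [d Hd].
  apply (RS_integral_power_cis_small minkowski minkowski_nondecr minkowski_0 minkowski_1 minkowski_sym
    minkowski_small_near_0 d Hd (Hsalem d Hd) k F HF).
Qed.
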